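(* If $F\in\mathbb{P}(\mathbb{Z})$ is aperiodic and $\sum_{k\in\mathbb{Z}}k^2F(k)<\infty$, then there exist $\beta\in(0,1)$ and $G\in L^1(\mathbb{Z})$ with $\sup_{n\in\mathbb{N}}\|G^{(n)}\|_{L^1(\mathbb{Z})}<\infty$ such that $F=\beta G+(1-\beta)\delta_0$.
   Context: $L^1(\mathbb{Z})$ is the Banach algebra of summable $F:\mathbb{Z}\to\mathbb{C}$ with norm $\sum_k|F(k)|$ and convolution $(F_1*F_2)(m)=\sum_kF_1(k)F_2(m-k)$; $G^{(n)}$ is the $n$-th convolution power and $\delta_m$ the point mass at $m$. $\mathbb{P}(\mathbb{Z})$ is the set of $F\in L^1(\mathbb{Z})$ with $F\ge0$, $\sum F=1$. $F$ is adapted if $\mathrm{supp}(F)=\{k:F(k)\ne0\}$ generates the group $\mathbb{Z}$, and aperiodic if every translate $\delta_m*F$, $m\in\mathbb{Z}$, is adapted. *)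

From Stdlib Require Import Reals ZArith Lra.
From Coquelicot Require Import Coquelicot.
Open Scope R_scope.

(* A function on Z is split into its nonnegative part k = 0,1,2,...
   and its negative part k = -1,-2,... *)
Definition zpos (F : Z -> R) : nat -> R := fun n => F (Z.of_nat n).
Definition zneg (F : Z -> R) : nat -> R := fun n => F (- Z.of_nat (S n))%Z.

Definition summable (F : Z -> R) : Prop :=
  ex_series (fun n => Rabs (zpos F n)) /\ ex_series (fun n => Rabs (zneg F n)).

(* sum over Z (meaningful for summable F) *)
Definition zsum (F : Z -> R) : R := Series (zpos F) + Series (zneg F).

Definition L1norm (F : Z -> R) : R := zsum (fun k => Rabs (F k)).

Definition delta (m : Z) : Z -> R := fun k => if Z.eq_dec k m then 1 else 0.

Definition conv (F1 F2 : Z -> R) : Z -> R :=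
  fun m => zsum (fun k => F1 k * F2 (m - k)%Z).

Fixpoint convpow (G : Z -> R) (n : nat) : Z -> R :=
  match n with
  | O => delta 0
  | S n' => conv G (convpow G n')
  end.

Definition prob (F : Z -> R) : Prop :=
  (forall k, 0 <= F k) /\ summable F /\ zsum F = 1.

Definition generates_Z (S : Z -> Prop) : Prop :=
  forall H : Z -> Prop,
    H 0%Z -> (forall a b, H a -> H b -> H (a - b)%Z) ->
    (forall x, S x -> H x) -> forall z, H z.

Definition supp (F : Z -> R) : Z -> Prop := fun k => F k <> 0.

Definition adapted (F : Z -> R) : Prop := generates_Z (supp F).

Definition aperiodic (F : Z -> R) : Prop :=
  forall m : Z, adapted (conv (delta m) F).

From Stdlib Require Import Reals ZArith Lra Lia List.
From Stdlib Require Classical_Prop.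
From Coquelicot Require Import Coquelicot.
Open Scope R_scope.

(* Write a = 1 - beta and G = (F - a delta_0) / (1 - a).  Aperiodicity gives
   1 - |F^(t)| >= kappa t^2 on [-pi, pi], and the finite second moment gives
   Re F^(t) >= 1 - sigma^2 t^2 / 2; for a small against kappa / sigma^2 the two combine
   into |G^(t)| <= 1 - (kappa / 4) t^2.  Fourier inversion then bounds G^(n)(k) by
   C / sqrt n and, through the transforms of the centred first and second moments,
   (k - n m)^2 G^(n)(k) by C sqrt n.  So |G^(n)(k)| <= C sqrt n / (n + (k - n m)^2), a
   Lorentzian of width sqrt n whose l^1 norm is bounded uniformly in n. *)

Lemma is_series_is_lim_seq (a : nat -> R) l : is_series a l <-> is_lim_seq (sum_n a) l.
Proof. reflexivity. Qed.

Lemma sum_n_single (a : nat -> R) p N :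
  (forall n, n <> p -> a n = 0) -> (p <= N)%nat -> sum_n a N = a p.
Proof.
  intros Ha. induction N as [|N IH]; intros HN.
  - replace p with O by lia. apply sum_O.
  - rewrite sum_Sn. unfold plus; simpl.
    destruct (Nat.eq_dec p (S N)) as [->|Hp].
    + rewrite (sum_n_ext_loc a (fun _ => 0)), sum_n_const.
      * simpl. ring.
      * intros n Hn. apply Ha. lia.
    + rewrite IH, (Ha (S N)) by lia. ring.
Qed.

Lemma is_series_single (a : nat -> R) p :
  (forall n, n <> p -> a n = 0) -> is_series a (a p).
Proof.
  intros Ha. apply is_series_is_lim_seq.
  apply is_lim_seq_ext_loc with (fun _ => a p); [|apply is_lim_seq_const].
  exists p. intros N HN. symmetry. now apply sum_n_single.
Qed.

Lemma is_series_le (a b : nat -> R) la lb :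
  is_series a la -> is_series b lb -> (forall n, a n <= b n) -> la <= lb.
Proof.
  intros Ha Hb Hab.
  apply (is_lim_seq_le (sum_n a) (sum_n b) la lb); auto.
  intro n. apply sum_n_m_le. auto.
Qed.

Definition is_zsum (f : Z -> R) (l : R) : Prop :=
  exists lp ln, is_series (zpos f) lp /\ is_series (zneg f) ln /\ l = lp + ln.

Lemma is_zsum_unique f l : is_zsum f l -> zsum f = l.
Proof.
  intros (lp & ln & H1 & H2 & ->). unfold zsum.
  now rewrite (is_series_unique _ _ H1), (is_series_unique _ _ H2).
Qed.

Lemma is_zsum_eq f l1 l2 : is_zsum f l1 -> is_zsum f l2 -> l1 = l2.
Proof. intros H1 H2. rewrite <- (is_zsum_unique _ _ H1). now apply is_zsum_unique. Qed.

Lemma zsum_correct f : summable f -> is_zsum f (zsum f).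
Proof.
  intros [H1 H2]. exists (Series (zpos f)), (Series (zneg f)).
  repeat split; apply Series_correct, ex_series_Rabs; auto.
Qed.

Lemma zsum_ext f g : (forall k, f k = g k) -> zsum f = zsum g.
Proof. intros H. unfold zsum. f_equal; apply Series_ext; intro; apply H. Qed.

Lemma is_zsum_ext f g l : (forall k, f k = g k) -> is_zsum f l -> is_zsum g l.
Proof.
  intros E (lp & ln & H1 & H2 & ->). exists lp, ln; repeat split.
  - eapply is_series_ext; [|exact H1]. intro; apply E.
  - eapply is_series_ext; [|exact H2]. intro; apply E.
Qed.

Lemma is_zsum_plus f g l1 l2 :
  is_zsum f l1 -> is_zsum g l2 -> is_zsum (fun k => f k + g k) (l1 + l2).
Proof.
  intros (lp & ln & H1 & H2 & ->) (lp' & ln' & H1' & H2' & ->).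
  exists (lp + lp'), (ln + ln'); repeat split.
  - apply (is_series_plus _ _ _ _ H1 H1').
  - apply (is_series_plus _ _ _ _ H2 H2').
  - ring.
Qed.

Lemma is_zsum_scal c f l : is_zsum f l -> is_zsum (fun k => c * f k) (c * l).
Proof.
  intros (lp & ln & H1 & H2 & ->). exists (c * lp), (c * ln); repeat split.
  - apply (is_series_scal_l c _ _ H1).
  - apply (is_series_scal_l c _ _ H2).
  - ring.
Qed.

Lemma is_zsum_le f g l1 l2 :
  is_zsum f l1 -> is_zsum g l2 -> (forall k, f k <= g k) -> l1 <= l2.
Proof.
  intros (lp & ln & H1 & H2 & ->) (lp' & ln' & H1' & H2' & ->) H.
  assert (lp <= lp') by (eapply is_series_le; eauto; intro; apply H).
  assert (ln <= ln') by (eapply is_series_le; eauto; intro; apply H). lra.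
Qed.

Lemma is_zsum_single f m : (forall k, k <> m -> f k = 0) -> is_zsum f (f m).
Proof.
  intros Hf. destruct (Z_le_gt_dec 0 m).
  - exists (f m), 0. repeat split; [| |ring].
    + replace (f m) with (zpos f (Z.to_nat m)) by (unfold zpos; f_equal; lia).
      apply is_series_single. intros n Hn. apply Hf. lia.
    + apply is_series_ext with (fun _ => 0); [intro n; symmetry; apply Hf; lia|].
      apply (is_series_single (fun _ => 0) O). auto.
  - exists 0, (f m). repeat split; [| |ring].
    + apply is_series_ext with (fun _ => 0); [intro n; symmetry; apply Hf; lia|].
      apply (is_series_single (fun _ => 0) O). auto.
    + replace (f m) with (zneg f (Z.to_nat (- m - 1))) by (unfold zneg; f_equal; lia).
      apply is_series_single. intros n Hn. apply Hf. lia.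
Qed.

Lemma is_zsum_zero : is_zsum (fun _ => 0) 0.
Proof. apply (is_zsum_single (fun _ => 0) 0%Z). auto. Qed.

Lemma is_zsum_point (v : R) j : is_zsum (fun k => if Z.eq_dec k j then v else 0) v.
Proof.
  assert (H := is_zsum_single (fun k => if Z.eq_dec k j then v else 0) j).
  simpl in H. destruct (Z.eq_dec j j); [|contradiction]. apply H.
  intros k Hk. destruct (Z.eq_dec k j); [contradiction|auto].
Qed.

Lemma zsum_nonneg f : summable f -> (forall k, 0 <= f k) -> 0 <= zsum f.
Proof. intros Hf H. eapply is_zsum_le; [apply is_zsum_zero|apply zsum_correct, Hf|exact H]. Qed.

Lemma summable_le f g : (forall k, Rabs (f k) <= g k) -> summable g -> summable f.
Proof.
  intros H [H1 H2].
  split; [eapply (@ex_series_le R_AbsRing R_CompleteNormedModule); [|exact H1]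
         |eapply (@ex_series_le R_AbsRing R_CompleteNormedModule); [|exact H2]];
    intro n; unfold zpos, zneg; simpl; unfold abs; simpl; rewrite Rabs_Rabsolu;
    (eapply Rle_trans; [apply H|apply Rle_abs]).
Qed.

Lemma summable_abs f : summable f -> summable (fun k => Rabs (f k)).
Proof.
  intros [H1 H2].
  split; [eapply ex_series_ext; [|exact H1]|eapply ex_series_ext; [|exact H2]];
    intro n; unfold zpos, zneg; now rewrite Rabs_Rabsolu.
Qed.

Lemma summable_scal c f : summable f -> summable (fun k => c * f k).
Proof.
  intros Hf. apply summable_le with (fun k => Rabs c * Rabs (f k)).
  { intro k. rewrite Rabs_mult. lra. }
  destruct (summable_abs f Hf) as [H1 H2]. split.
  - apply ex_series_ext with (fun n => Rabs c * Rabs (zpos (fun k => Rabs (f k)) n)).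
    + intro n. unfold zpos. rewrite Rabs_mult, !Rabs_Rabsolu. reflexivity.
    + apply (ex_series_scal_l (V := R_NormedModule)). exact H1.
  - apply ex_series_ext with (fun n => Rabs c * Rabs (zneg (fun k => Rabs (f k)) n)).
    + intro n. unfold zneg. rewrite Rabs_mult, !Rabs_Rabsolu. reflexivity.
    + apply (ex_series_scal_l (V := R_NormedModule)). exact H2.
Qed.

Lemma summable_plus f g : summable f -> summable g -> summable (fun k => f k + g k).
Proof.
  intros Hf Hg. apply summable_le with (fun k => Rabs (f k) + Rabs (g k)).
  { intro k. apply Rabs_triang. }
  destruct (summable_abs f Hf) as [F1 F2], (summable_abs g Hg) as [G1 G2].
  split; eapply (@ex_series_le R_AbsRing R_CompleteNormedModule).
  2: apply (ex_series_plus (V := R_NormedModule)); [exact F1|exact G1].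
  3: apply (ex_series_plus (V := R_NormedModule)); [exact F2|exact G2].
  all: intro n; unfold zpos, zneg; change (norm ?x) with (Rabs x); rewrite !Rabs_Rabsolu;
    rewrite Rabs_pos_eq; [apply Rle_refl|apply Rplus_le_le_0_compat; apply Rabs_pos].
Qed.

Lemma summable_single f m : (forall k, k <> m -> f k = 0) -> summable f.
Proof.
  intros H. destruct (is_zsum_single (fun k => Rabs (f k)) m) as [lp [ln [H1 [H2 _]]]].
  - intros k Hk. rewrite H; auto. apply Rabs_R0.
  - split; eexists; eauto.
Qed.

Lemma zsum_scal c f : summable f -> zsum (fun k => c * f k) = c * zsum f.
Proof. intros Hf. apply is_zsum_unique, is_zsum_scal, zsum_correct, Hf. Qed.

Lemma zsum_abs_le f g : summable g -> (forall k, Rabs (f k) <= g k) -> Rabs (zsum f) <= zsum g.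
Proof.
  intros Hg Hfg. assert (Hf : summable f) by (eapply summable_le; eauto).
  assert (Zf := zsum_correct f Hf). assert (Zg := zsum_correct g Hg).
  apply Rabs_le. split.
  - replace (- zsum g) with (-1 * zsum g) by ring.
    eapply is_zsum_le; [exact (is_zsum_scal (-1) _ _ Zg)|exact Zf|].
    intro k. specialize (Hfg k). apply Rabs_le_between in Hfg. lra.
  - eapply is_zsum_le; [exact Zf|exact Zg|].
    intro k. specialize (Hfg k). apply Rabs_le_between in Hfg. lra.
Qed.

Lemma delta_neq m k : k <> m -> delta m k = 0.
Proof. intros Hk. unfold delta. destruct (Z.eq_dec k m); [contradiction|auto]. Qed.

Lemma L1norm_delta0 : L1norm (delta 0) = 1.
Proof.
  unfold L1norm. apply is_zsum_unique.
  replace 1 with (Rabs (delta 0 0)) by (unfold delta; simpl; apply Rabs_R1).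
  apply (is_zsum_single (fun k => Rabs (delta 0 k))).
  intros k Hk. rewrite delta_neq; auto. apply Rabs_R0.
Qed.

Lemma conv_delta_l m F j : conv (delta m) F j = F (j - m)%Z.
Proof.
  unfold conv. apply is_zsum_unique.
  replace (F (j - m)%Z) with (delta m m * F (j - m)%Z)
    by (unfold delta; destruct (Z.eq_dec m m); [ring|contradiction]).
  apply (is_zsum_single (fun k => delta m k * F (j - k)%Z)).
  intros k Hk. rewrite delta_neq; auto. ring.
Qed.

(* The Stdlib continuity lemmas in eta-expanded form, so that [auto] can use them. *)
Lemma cont_plus f g : continuity f -> continuity g -> continuity (fun x => f x + g x).
Proof. exact (continuity_plus f g). Qed.
Lemma cont_minus f g : continuity f -> continuity g -> continuity (fun x => f x - g x).
Proof. exact (continuity_minus f g). Qed.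
Lemma cont_mult f g : continuity f -> continuity g -> continuity (fun x => f x * g x).
Proof. exact (continuity_mult f g). Qed.
Lemma cont_const c : continuity (fun _ => c).
Proof. intro x. apply continuity_pt_const. intros a b; auto. Qed.
Lemma cont_id : continuity (fun x => x).
Proof. exact (derivable_continuous _ derivable_id). Qed.
Lemma cont_comp f g : continuity f -> continuity g -> continuity (fun x => g (f x)).
Proof. exact (continuity_comp f g). Qed.
Lemma cont_abs f : continuity f -> continuity (fun x => Rabs (f x)).
Proof. intros H. apply cont_comp; auto. exact Rcontinuity_abs. Qed.
Lemma cont_pow f n : continuity f -> continuity (fun x => f x ^ n).
Proof. intros H. induction n; simpl; [apply cont_const|apply cont_mult; auto]. Qed.
Lemma cont_cos_scale c : continuity (fun x => cos (c * x)).
Proof. apply (cont_comp (fun x => c * x)), continuity_cos. apply cont_mult; [apply cont_const|apply cont_id]. Qed.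
Lemma cont_sin_scale c : continuity (fun x => sin (c * x)).
Proof. apply (cont_comp (fun x => c * x)), continuity_sin. apply cont_mult; [apply cont_const|apply cont_id]. Qed.

Create HintDb cont.
#[local] Hint Resolve cont_plus cont_minus cont_mult cont_const cont_id cont_abs cont_pow
  cont_cos_scale cont_sin_scale continuity_cos continuity_sin : cont.
Ltac solve_cont := solve [auto 20 with cont].

Lemma ex_RInt_continuity f a b : continuity f -> ex_RInt f a b.
Proof.
  intros H. apply (@ex_RInt_continuous R_CompleteNormedModule).
  intros z _. apply continuity_pt_filterlim, H.
Qed.

Lemma continuity_sum_n (a : nat -> R) (f : nat -> R -> R) N :
  (forall n, continuity (f n)) -> continuity (fun t => sum_n (fun n => a n * f n t) N).
Proof.
  intros Hc. induction N as [|N IH]; intro y.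
  - apply continuity_pt_ext with (fun y => a O * f O y).
    + intro. now rewrite sum_O.
    + apply cont_mult; [apply cont_const|apply Hc].
  - apply continuity_pt_ext with (fun y => sum_n (fun n => a n * f n y) N + a (S N) * f (S N) y).
    + intro. now rewrite sum_Sn.
    + apply cont_plus; [exact IH|apply cont_mult; [apply cont_const|apply Hc]].
Qed.

Definition series_tail (a : nat -> R) N :=
  Series (fun n => Rabs (a n)) - sum_n (fun n => Rabs (a n)) N.

Lemma is_lim_seq_series_tail a : ex_series (fun n => Rabs (a n)) -> is_lim_seq (series_tail a) 0.
Proof.
  intros H. unfold series_tail.
  replace 0 with (Series (fun n => Rabs (a n)) - Series (fun n => Rabs (a n))) by ring.
  apply is_lim_seq_minus'; [apply is_lim_seq_const|exact (Series_correct _ H)].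
Qed.

Lemma sum_n_increment_abs_le (a b : nat -> R) N d :
  (forall n, Rabs (b n) <= Rabs (a n)) ->
  Rabs (sum_n b (N + d) - sum_n b N) <=
    sum_n (fun n => Rabs (a n)) (N + d) - sum_n (fun n => Rabs (a n)) N.
Proof.
  intros H. induction d as [|d IH].
  - rewrite Nat.add_0_r, !Rminus_diag, Rabs_R0. lra.
  - rewrite Nat.add_succ_r, !sum_Sn. unfold plus; simpl.
    replace (sum_n b (N + d) + b (S (N + d)) - sum_n b N)
      with ((sum_n b (N + d) - sum_n b N) + b (S (N + d))) by ring.
    eapply Rle_trans; [apply Rabs_triang|]. specialize (H (S (N + d))). lra.
Qed.

Lemma Series_tail_le (a b : nat -> R) N :
  ex_series (fun n => Rabs (a n)) -> (forall n, Rabs (b n) <= Rabs (a n)) ->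
  Rabs (Series b - sum_n b N) <= series_tail a N.
Proof.
  intros Ha Hb.
  assert (Eb : ex_series b).
  { apply ex_series_Rabs. eapply (@ex_series_le R_AbsRing R_CompleteNormedModule); [|exact Ha].
    intro n. simpl. unfold abs; simpl. rewrite Rabs_Rabsolu. auto. }
  apply Series_correct in Eb. apply Series_correct in Ha.
  change (Rbar_le (Rabs (Series b - sum_n b N)) (series_tail a N)).
  apply (is_lim_seq_le_loc (fun M => Rabs (sum_n b M - sum_n b N))
    (fun M => sum_n (fun n => Rabs (a n)) M - sum_n (fun n => Rabs (a n)) N)).
  - exists N. intros M HM. replace M with (N + (M - N))%nat by lia.
    apply sum_n_increment_abs_le, Hb.
  - apply (is_lim_seq_abs _ (Series b - sum_n b N)).
    apply is_lim_seq_minus'; [exact Eb|apply is_lim_seq_const].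
  - apply is_lim_seq_minus'; [exact Ha|apply is_lim_seq_const].
Qed.

Lemma series_tail_nonneg a N : ex_series (fun n => Rabs (a n)) -> 0 <= series_tail a N.
Proof.
  intros Ha. eapply Rle_trans; [apply Rabs_pos|apply (Series_tail_le a a N Ha)].
  intro; lra.
Qed.

Lemma Rabs_scal_bounded_le (a : nat -> R) (f : nat -> R -> R) n x :
  (forall n x, Rabs (f n x) <= 1) -> Rabs (a n * f n x) <= Rabs (a n).
Proof.
  intros Hf. rewrite Rabs_mult. specialize (Hf n x).
  assert (0 <= Rabs (a n)) by apply Rabs_pos. nra.
Qed.

Lemma continuity_Series_bounded (a : nat -> R) (f : nat -> R -> R) :
  ex_series (fun n => Rabs (a n)) -> (forall n x, Rabs (f n x) <= 1) ->
  (forall n, continuity (f n)) ->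
  continuity (fun x => Series (fun n => a n * f n x)).
Proof.
  intros Ha Hf Hc x.
  apply (CVU_cont_open (fun N x => sum_n (fun n => a n * f n x) N) (fun _ => True)); auto.
  - apply open_true.
  - intros eps. assert (T := is_lim_seq_series_tail a Ha). apply is_lim_seq_spec in T.
    destruct (T eps) as [N HN]. exists N. intros n Hn y _.
    rewrite Rabs_minus_sym. eapply Rle_lt_trans.
    + apply (Series_tail_le a (fun k => a k * f k y) n Ha).
      intro k. now apply Rabs_scal_bounded_le.
    + specialize (HN n Hn). rewrite Rminus_0_r in HN. eapply Rle_lt_trans; [apply Rle_abs|exact HN].
  - intros N y _. now apply continuity_sum_n.
Qed.

Lemma RInt_sum_n (a : nat -> R) (f : nat -> R -> R) u lo hi N :
  (forall n, continuity (f n)) -> continuity u ->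
  sum_n (fun n => a n * RInt (fun t => u t * f n t) lo hi) N =
  RInt (fun t => u t * sum_n (fun n => a n * f n t) N) lo hi.
Proof.
  intros Hc Hu. induction N as [|N IH].
  - rewrite sum_O, <- (RInt_scal (V := R_CompleteNormedModule)).
    + apply RInt_ext. intros. rewrite sum_O. unfold scal; simpl. unfold mult; simpl. ring.
    + apply ex_RInt_continuity, cont_mult; auto.
  - rewrite sum_Sn, IH. unfold plus; simpl.
    assert (CN := continuity_sum_n a f N Hc).
    rewrite <- (RInt_scal (V := R_CompleteNormedModule)), <- (RInt_plus (V := R_CompleteNormedModule)).
    + apply RInt_ext. intros. rewrite sum_Sn. unfold scal, plus; simpl. unfold mult; simpl. ring.
    + apply ex_RInt_continuity, cont_mult; auto.
    + apply ex_RInt_continuity. apply cont_mult; [apply cont_const|apply cont_mult; auto].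
    + apply ex_RInt_continuity, cont_mult; auto.
Qed.

Lemma is_series_RInt (a : nat -> R) (f : nat -> R -> R) u lo hi :
  lo <= hi ->
  ex_series (fun n => Rabs (a n)) -> (forall n x, Rabs (f n x) <= 1) ->
  (forall n, continuity (f n)) -> continuity u ->
  is_series (fun n => a n * RInt (fun t => u t * f n t) lo hi)
            (RInt (fun t => u t * Series (fun n => a n * f n t)) lo hi).
Proof.
  intros Hlh Ha Hf Hc Hu.
  destruct (continuity_ab_maj (fun t => Rabs (u t)) lo hi Hlh) as [m [Hm _]].
  { intros. apply cont_abs. auto. }
  set (U := Rabs (u m)). assert (U0 : 0 <= U) by apply Rabs_pos.
  assert (HS := continuity_Series_bounded a f Ha Hf Hc).
  apply is_series_is_lim_seq.
  apply is_lim_seq_ext with (fun N => RInt (fun t => u t * sum_n (fun n => a n * f n t) N) lo hi).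
  { intros N. symmetry. apply RInt_sum_n; auto. }
  apply is_lim_seq_spec. intros eps.
  assert (T := is_lim_seq_series_tail a Ha). apply is_lim_seq_spec in T.
  assert (Hpos : 0 < eps / ((hi - lo) * U + 1)) by (apply Rdiv_lt_0_compat; [apply cond_pos|nra]).
  destruct (T (mkposreal _ Hpos)) as [N HN]. exists N. intros n Hn.
  assert (CN := continuity_sum_n a f n Hc).
  rewrite <- (RInt_minus (V := R_CompleteNormedModule)).
  2, 3: apply ex_RInt_continuity, cont_mult; auto.
  eapply Rle_lt_trans.
  { apply abs_RInt_le_const with (M := U * series_tail a n); [exact Hlh| |].
    - apply ex_RInt_continuity, cont_minus; apply cont_mult; auto.
    - intros t Ht. unfold minus, plus, opp; simpl.
      replace (u t * sum_n (fun k => a k * f k t) n + - (u t * Series (fun k => a k * f k t)))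
        with (- (u t * (Series (fun k => a k * f k t) - sum_n (fun k => a k * f k t) n))) by ring.
      rewrite Rabs_Ropp, Rabs_mult.
      apply Rmult_le_compat; try apply Rabs_pos; [apply Hm; auto|].
      apply Series_tail_le; auto. intro k. now apply Rabs_scal_bounded_le. }
  specialize (HN n Hn). simpl in HN.
  assert (Ht := series_tail_nonneg a n Ha).
  rewrite Rminus_0_r, Rabs_pos_eq in HN by auto.
  apply Rmult_lt_compat_l with (r := (hi - lo) * U + 1) in HN; [|nra].
  field_simplify in HN; nra.
Qed.

(** * Fourier transform on [Z] *)

Definition fourier_cos (w : Z -> R) (t : R) := zsum (fun j => w j * cos (IZR j * t)).
Definition fourier_sin (w : Z -> R) (t : R) := zsum (fun j => w j * sin (IZR j * t)).
Definition fourier (w : Z -> R) (t : R) : C := (fourier_cos w t, fourier_sin w t).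

(* Real part of (1/2π) ∫ psi(t) e^(-ikt) dt over [-π, π]; for psi = fourier w it
   recovers w k. *)
Definition fourier_coef (psi : R -> C) (k : Z) : R :=
  / (2 * PI) * RInt (fun t => fst (psi t) * cos (IZR k * t) + snd (psi t) * sin (IZR k * t)) (- PI) PI.

Definition continuity_C (psi : R -> C) :=
  continuity (fun t => fst (psi t)) /\ continuity (fun t => snd (psi t)).

Lemma Rabs_cos_le_1 x : Rabs (cos x) <= 1.
Proof. apply Rabs_le, COS_bound. Qed.
Lemma Rabs_sin_le_1 x : Rabs (sin x) <= 1.
Proof. apply Rabs_le, SIN_bound. Qed.

Lemma summable_mult_bounded w (c : Z -> R) :
  summable w -> (forall j, Rabs (c j) <= 1) -> summable (fun j => w j * c j).
Proof.
  intros Hw Hc. apply summable_le with (fun k => Rabs (w k)); [|now apply summable_abs].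
  intro k. rewrite Rabs_mult. specialize (Hc k). assert (0 <= Rabs (w k)) by apply Rabs_pos. nra.
Qed.

Lemma summable_mult_cos w t : summable w -> summable (fun j => w j * cos (IZR j * t)).
Proof. intros Hw. apply summable_mult_bounded; auto. intro; apply Rabs_cos_le_1. Qed.
Lemma summable_mult_sin w t : summable w -> summable (fun j => w j * sin (IZR j * t)).
Proof. intros Hw. apply summable_mult_bounded; auto. intro; apply Rabs_sin_le_1. Qed.

Lemma continuity_Series_trig (a : nat -> R) (idx : nat -> Z) (tr : R -> R) :
  ex_series (fun n => Rabs (a n)) -> continuity tr -> (forall x, Rabs (tr x) <= 1) ->
  continuity (fun t => Series (fun n => a n * tr (IZR (idx n) * t))).
Proof.
  intros Ha Htr Hb. apply (continuity_Series_bounded a (fun n t => tr (IZR (idx n) * t))); auto.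
  intros n. apply (cont_comp (fun x => IZR (idx n) * x)); auto. solve_cont.
Qed.

Lemma continuity_zsum_trig w (tr : R -> R) :
  summable w -> continuity tr -> (forall x, Rabs (tr x) <= 1) ->
  continuity (fun t => zsum (fun j => w j * tr (IZR j * t))).
Proof.
  intros [H1 H2] Htr Hb. unfold zsum. apply cont_plus.
  - apply (continuity_Series_trig (zpos w) (fun n => Z.of_nat n) tr); auto.
  - apply (continuity_Series_trig (zneg w) (fun n => (- Z.of_nat (S n))%Z) tr); auto.
Qed.

Lemma continuity_C_fourier w : summable w -> continuity_C (fourier w).
Proof.
  intros Hw. split; simpl; apply continuity_zsum_trig; auto.
  - exact continuity_cos.
  - exact Rabs_cos_le_1.
  - exact continuity_sin.
  - exact Rabs_sin_le_1.
Qed.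

Lemma continuity_C_plus f g :
  continuity_C f -> continuity_C g -> continuity_C (fun t => Cplus (f t) (g t)).
Proof. intros [F1 F2] [G1 G2]. split; simpl; solve_cont. Qed.
Lemma continuity_C_mult f g :
  continuity_C f -> continuity_C g -> continuity_C (fun t => Cmult (f t) (g t)).
Proof. intros [F1 F2] [G1 G2]. split; simpl; solve_cont. Qed.
Lemma continuity_C_const c : continuity_C (fun _ => c).
Proof. split; apply cont_const. Qed.

#[local] Hint Resolve continuity_C_plus continuity_C_mult continuity_C_const
  continuity_C_fourier : cont.

Lemma fourier_coef_shift psi k j :
  fourier_coef psi (k - j) = / (2 * PI) * RInt (fun t =>
     (fst (psi t) * cos (IZR k * t) + snd (psi t) * sin (IZR k * t)) * cos (IZR j * t) +
     (fst (psi t) * sin (IZR k * t) - snd (psi t) * cos (IZR k * t)) * sin (IZR j * t)) (- PI) PI.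
Proof.
  unfold fourier_coef. f_equal. apply RInt_ext. intros t _. simpl.
  rewrite minus_IZR. replace ((IZR k - IZR j) * t) with (IZR k * t - IZR j * t) by ring.
  rewrite cos_minus, sin_minus. ring.
Qed.

Lemma is_series_fourier_coef_mult (a : nat -> R) (idx : nat -> Z) psi k :
  ex_series (fun n => Rabs (a n)) -> continuity_C psi ->
  is_series (fun n => a n * fourier_coef psi (k - idx n))
    (/ (2 * PI) * (RInt (fun t => (fst (psi t) * cos (IZR k * t) + snd (psi t) * sin (IZR k * t)) *
                            Series (fun n => a n * cos (IZR (idx n) * t))) (- PI) PI +
                   RInt (fun t => (fst (psi t) * sin (IZR k * t) - snd (psi t) * cos (IZR k * t)) *
                            Series (fun n => a n * sin (IZR (idx n) * t))) (- PI) PI)).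
Proof.
  intros Ha [Hp Hq].
  set (u := fun t => fst (psi t) * cos (IZR k * t) + snd (psi t) * sin (IZR k * t)).
  set (v := fun t => fst (psi t) * sin (IZR k * t) - snd (psi t) * cos (IZR k * t)).
  assert (Cu : continuity u) by (unfold u; solve_cont).
  assert (Cv : continuity v) by (unfold v; solve_cont).
  assert (Hlh : - PI <= PI) by (assert (H := PI_RGT_0); lra).
  assert (E1 := is_series_RInt a (fun n t => cos (IZR (idx n) * t)) u (- PI) PI Hlh Ha
     (fun n x => Rabs_cos_le_1 _) (fun n => cont_cos_scale _) Cu).
  assert (E2 := is_series_RInt a (fun n t => sin (IZR (idx n) * t)) v (- PI) PI Hlh Ha
     (fun n x => Rabs_sin_le_1 _) (fun n => cont_sin_scale _) Cv).
  assert (E := is_series_scal_l (/ (2 * PI)) _ _ (is_series_plus _ _ _ _ E1 E2)).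
  eapply is_series_ext; [|exact E]. intro n. simpl.
  rewrite fourier_coef_shift. unfold scal, plus; simpl. unfold mult; simpl.
  assert (HP : RInt (fun t => u t * cos (IZR (idx n) * t) + v t * sin (IZR (idx n) * t)) (- PI) PI
     = RInt (fun t => u t * cos (IZR (idx n) * t)) (- PI) PI
       + RInt (fun t => v t * sin (IZR (idx n) * t)) (- PI) PI)
    by (apply (RInt_plus (V := R_CompleteNormedModule)); apply ex_RInt_continuity; solve_cont).
  unfold u, v in HP. rewrite HP. unfold u, v. ring.
Qed.

Lemma RInt_plus4 (f1 f2 f3 f4 : R -> R) a b :
  continuity f1 -> continuity f2 -> continuity f3 -> continuity f4 ->
  RInt (fun t => f1 t + f2 t + f3 t + f4 t) a b = RInt f1 a b + RInt f2 a b + RInt f3 a b + RInt f4 a b.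
Proof.
  intros C1 C2 C3 C4.
  rewrite (RInt_plus (V := R_CompleteNormedModule) (fun t => f1 t + f2 t + f3 t) f4),
    (RInt_plus (V := R_CompleteNormedModule) (fun t => f1 t + f2 t) f3),
    (RInt_plus (V := R_CompleteNormedModule) f1 f2); try reflexivity.
  all: apply ex_RInt_continuity; solve_cont.
Qed.

Lemma is_zsum_fourier_coef_mult w psi k : summable w -> continuity_C psi ->
  is_zsum (fun j => w j * fourier_coef psi (k - j))
    (fourier_coef (fun t => Cmult (psi t) (fourier w t)) k).
Proof.
  intros Hw Hpsi. destruct Hw as [H1 H2].
  eexists _, _. split; [exact (is_series_fourier_coef_mult (zpos w) (fun n => Z.of_nat n) psi k H1 Hpsi)|].
  split; [exact (is_series_fourier_coef_mult (zneg w) (fun n => (- Z.of_nat (S n))%Z) psi k H2 Hpsi)|].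
  destruct Hpsi as [Hp Hq].
  set (u := fun t => fst (psi t) * cos (IZR k * t) + snd (psi t) * sin (IZR k * t)).
  set (v := fun t => fst (psi t) * sin (IZR k * t) - snd (psi t) * cos (IZR k * t)).
  set (Spc := fun t => Series (fun n => zpos w n * cos (IZR (Z.of_nat n) * t))).
  set (Sps := fun t => Series (fun n => zpos w n * sin (IZR (Z.of_nat n) * t))).
  set (Snc := fun t => Series (fun n => zneg w n * cos (IZR (- Z.of_nat (S n)) * t))).
  set (Sns := fun t => Series (fun n => zneg w n * sin (IZR (- Z.of_nat (S n)) * t))).
  assert (C1 : continuity Spc)
    by (apply continuity_Series_trig; auto; [exact continuity_cos|exact Rabs_cos_le_1]).
  assert (C2 : continuity Sps)
    by (apply continuity_Series_trig; auto; [exact continuity_sin|exact Rabs_sin_le_1]).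
  assert (C3 : continuity Snc)
    by (apply continuity_Series_trig; auto; [exact continuity_cos|exact Rabs_cos_le_1]).
  assert (C4 : continuity Sns)
    by (apply continuity_Series_trig; auto; [exact continuity_sin|exact Rabs_sin_le_1]).
  unfold fourier_coef.
  rewrite (RInt_ext _ (fun t => u t * Spc t + v t * Sps t + u t * Snc t + v t * Sns t)).
  2: { intros t _. unfold u, v, Spc, Sps, Snc, Sns, fourier, fourier_cos, fourier_sin, zsum, zpos, zneg.
       simpl. ring. }
  rewrite RInt_plus4 by (unfold u, v; solve_cont).
  unfold u, v, Spc, Sps, Snc, Sns. match goal with |- ?a = ?b => change (@eq R a b) end. ring.
Qed.

Lemma fourier_coef_plus f g k : continuity_C f -> continuity_C g ->
  fourier_coef (fun t => Cplus (f t) (g t)) k = fourier_coef f k + fourier_coef g k.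
Proof.
  intros [F1 F2] [G1 G2]. unfold fourier_coef. rewrite <- Rmult_plus_distr_l. f_equal.
  rewrite <- (RInt_plus (V := R_CompleteNormedModule)).
  - apply RInt_ext. intros. simpl. unfold plus; simpl. ring.
  - apply ex_RInt_continuity. solve_cont.
  - apply ex_RInt_continuity. solve_cont.
Qed.

Lemma fourier_coef_scal c f k : continuity_C f ->
  fourier_coef (fun t => Cmult (RtoC c) (f t)) k = c * fourier_coef f k.
Proof.
  intros [F1 F2]. unfold fourier_coef.
  rewrite (RInt_ext _ (fun t => scal c (fst (f t) * cos (IZR k * t) + snd (f t) * sin (IZR k * t)))).
  - rewrite (RInt_scal (V := R_CompleteNormedModule)).
    + unfold scal; simpl; unfold mult; simpl. ring.
    + apply ex_RInt_continuity. solve_cont.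
  - intros. unfold RtoC. simpl. unfold scal; simpl; unfold mult; simpl. ring.
Qed.

Lemma fourier_coef_zero k : fourier_coef (fun _ => (0, 0)) k = 0.
Proof.
  unfold fourier_coef. rewrite (RInt_ext _ (fun _ => 0)), RInt_const.
  - unfold scal; simpl; unfold mult; simpl. ring.
  - intros. simpl. ring.
Qed.

Lemma RInt_cos_int k :
  RInt (fun t => cos (IZR k * t)) (- PI) PI = if Z.eq_dec k 0 then 2 * PI else 0.
Proof.
  destruct (Z.eq_dec k 0) as [->|Hk0].
  - rewrite (RInt_ext _ (fun _ => 1)), RInt_const.
    + unfold scal; simpl; unfold mult; simpl. ring.
    + intros. rewrite Rmult_0_l. apply cos_0.
  - assert (Hk : IZR k <> 0) by (apply not_0_IZR; auto).
    rewrite (is_RInt_unique _ _ _ _ (is_RInt_derive (V := R_CompleteNormedModule)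
      (fun t => sin (IZR k * t) / IZR k) (fun t => cos (IZR k * t)) (- PI) PI
      (fun x _ => ltac:(auto_derive; [auto|field; auto]))
      (fun x _ => proj1 (continuity_pt_filterlim _ _) (cont_cos_scale _ x)))).
    unfold minus, plus, opp; simpl.
    rewrite !sin_eq_0_1.
    + field. auto.
    + exists (- k)%Z. rewrite opp_IZR. ring.
    + exists k. ring.
Qed.

Lemma fourier_coef_one k : fourier_coef (fun _ => (1, 0)) k = delta 0 k.
Proof.
  unfold fourier_coef. rewrite (RInt_ext _ (fun t => cos (IZR k * t))).
  - rewrite RInt_cos_int. unfold delta. assert (0 < PI) by apply PI_RGT_0.
    destruct (Z.eq_dec k 0); field; lra.
  - intros. simpl. ring.
Qed.

(* For the centred moment densities G1 j = (j - m) G j and G2 j = (j - m)^2 G j,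
   [fourier_pow_m1 G G1 n] and [fourier_pow_m2 G G1 G2 n] are the transforms of
   k |-> (k - n m) G^(n)(k) and k |-> (k - n m)^2 G^(n)(k): the recursions expand
   k - (n+1) m = (j - m) + ((k - j) - n m) inside the convolution. *)
Fixpoint fourier_pow (G : Z -> R) (n : nat) : R -> C :=
  match n with
  | O => fun _ => (1, 0)
  | S n => fun t => Cmult (fourier_pow G n t) (fourier G t)
  end.

Fixpoint fourier_pow_m1 (G G1 : Z -> R) (n : nat) : R -> C :=
  match n with
  | O => fun _ => (0, 0)
  | S n => fun t => Cplus (Cmult (fourier_pow G n t) (fourier G1 t))
                          (Cmult (fourier_pow_m1 G G1 n t) (fourier G t))
  end.

Fixpoint fourier_pow_m2 (G G1 G2 : Z -> R) (n : nat) : R -> C :=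
  match n with
  | O => fun _ => (0, 0)
  | S n => fun t => Cplus (Cplus (Cmult (fourier_pow G n t) (fourier G2 t))
                                 (Cmult (RtoC 2) (Cmult (fourier_pow_m1 G G1 n t) (fourier G1 t))))
                          (Cmult (fourier_pow_m2 G G1 G2 n t) (fourier G t))
  end.

Lemma continuity_C_fourier_pow G n : summable G -> continuity_C (fourier_pow G n).
Proof. intros. induction n; simpl; auto with cont. Qed.

Lemma continuity_C_fourier_pow_m1 G G1 n :
  summable G -> summable G1 -> continuity_C (fourier_pow_m1 G G1 n).
Proof.
  intros. induction n; simpl; auto with cont.
  apply continuity_C_plus; auto with cont. apply continuity_C_mult; auto with cont.
  now apply continuity_C_fourier_pow.
Qed.

Lemma continuity_C_fourier_pow_m2 G G1 G2 n : summable G -> summable G1 -> summable G2 ->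
  continuity_C (fourier_pow_m2 G G1 G2 n).
Proof.
  intros. induction n; simpl; auto with cont.
  assert (continuity_C (fourier_pow G n)) by now apply continuity_C_fourier_pow.
  assert (continuity_C (fourier_pow_m1 G G1 n)) by now apply continuity_C_fourier_pow_m1.
  auto 10 with cont.
Qed.

#[local] Hint Resolve continuity_C_fourier_pow continuity_C_fourier_pow_m1
  continuity_C_fourier_pow_m2 : cont.

Lemma convpow_fourier G n k : summable G -> convpow G n k = fourier_coef (fourier_pow G n) k.
Proof.
  intros HG. revert k. induction n as [|n IH]; intro k.
  - simpl. now rewrite fourier_coef_one.
  - simpl. unfold conv. rewrite (zsum_ext _ (fun j => G j * fourier_coef (fourier_pow G n) (k - j))).
    + apply is_zsum_unique, is_zsum_fourier_coef_mult; auto with cont.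
    + intro j. now rewrite IH.
Qed.

Lemma convpow_m1_fourier G m n k :
  summable G -> summable (fun j => (IZR j - m) * G j) ->
  (IZR k - INR n * m) * convpow G n k =
    fourier_coef (fourier_pow_m1 G (fun j => (IZR j - m) * G j) n) k.
Proof.
  intros HG HG1. set (G1 := fun j => (IZR j - m) * G j). revert k.
  induction n as [|n IH]; intro k.
  - simpl. rewrite fourier_coef_zero. unfold delta.
    destruct (Z.eq_dec k 0) as [->|]; simpl; ring.
  - rewrite (convpow_fourier G (S n) k HG).
    assert (Z1 := is_zsum_scal (IZR k - INR (S n) * m) _ _
      (is_zsum_fourier_coef_mult G (fourier_pow G n) k HG ltac:(auto with cont))).
    assert (Z2 := is_zsum_plus _ _ _ _
      (is_zsum_fourier_coef_mult G1 (fourier_pow G n) k HG1 ltac:(auto with cont))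
      (is_zsum_fourier_coef_mult G (fourier_pow_m1 G G1 n) k HG ltac:(auto with cont))).
    simpl. rewrite fourier_coef_plus by auto with cont.
    eapply is_zsum_eq; [exact Z1|].
    eapply is_zsum_ext; [|exact Z2]. intro j. cbv beta.
    rewrite S_INR, <- IH, <- convpow_fourier by auto. unfold G1. rewrite minus_IZR.
    match goal with |- ?a = ?b => change (@eq R a b) end. ring.
Qed.

Lemma convpow_m2_fourier G m n k :
  summable G -> summable (fun j => (IZR j - m) * G j) ->
  summable (fun j => (IZR j - m) ^ 2 * G j) ->
  (IZR k - INR n * m) ^ 2 * convpow G n k =
    fourier_coef (fourier_pow_m2 G (fun j => (IZR j - m) * G j) (fun j => (IZR j - m) ^ 2 * G j) n) k.
Proof.
  intros HG HG1 HG2. set (G1 := fun j => (IZR j - m) * G j).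
  set (G2 := fun j => (IZR j - m) ^ 2 * G j). revert k.
  induction n as [|n IH]; intro k.
  - simpl. rewrite fourier_coef_zero. unfold delta.
    destruct (Z.eq_dec k 0) as [->|]; simpl; ring.
  - rewrite (convpow_fourier G (S n) k HG).
    assert (Z1 := is_zsum_scal ((IZR k - INR (S n) * m) ^ 2) _ _
      (is_zsum_fourier_coef_mult G (fourier_pow G n) k HG ltac:(auto with cont))).
    assert (Z2 := is_zsum_fourier_coef_mult G2 (fourier_pow G n) k HG2 ltac:(auto with cont)).
    assert (Z3 := is_zsum_scal 2 _ _
      (is_zsum_fourier_coef_mult G1 (fourier_pow_m1 G G1 n) k HG1 ltac:(auto with cont))).
    assert (Z4 := is_zsum_fourier_coef_mult G (fourier_pow_m2 G G1 G2 n) k HG ltac:(auto with cont)).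
    assert (Z5 := is_zsum_plus _ _ _ _ (is_zsum_plus _ _ _ _ Z2 Z3) Z4).
    simpl. rewrite !fourier_coef_plus, fourier_coef_scal by auto 10 with cont.
    eapply is_zsum_eq; [exact Z1|].
    eapply is_zsum_ext; [|exact Z5]. intro j. cbv beta. unfold G1, G2 in *.
    rewrite S_INR, <- IH, <- convpow_m1_fourier, <- convpow_fourier by auto.
    rewrite minus_IZR. match goal with |- ?a = ?b => change (@eq R a b) end. ring.
Qed.

Lemma Rabs_sin_le_pos x : 0 < x -> Rabs (sin x) <= x.
Proof.
  intros Hx. assert (sin x < x) by (apply sin_lt_x; lra).
  assert (H2 := SIN_bound x). destruct (Rle_dec 1 x).
  - apply Rabs_le. lra.
  - assert (0 <= sin x) by (apply sin_ge_0; assert (H3 := PI2_3_2); lra).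
    rewrite Rabs_pos_eq; lra.
Qed.

Lemma Rabs_sin_le x : Rabs (sin x) <= Rabs x.
Proof.
  destruct (Rtotal_order x 0) as [H|[->|H]].
  - assert (H' := Rabs_sin_le_pos (-x)). rewrite sin_neg, Rabs_Ropp in H'.
    rewrite (Rabs_left x) by lra. apply H'. lra.
  - rewrite sin_0, Rabs_R0. lra.
  - rewrite (Rabs_pos_eq x) by lra. now apply Rabs_sin_le_pos.
Qed.

Lemma one_minus_cos x : 1 - cos x = 2 * sin (x / 2) ^ 2.
Proof. replace x with (2 * (x / 2)) at 1 by field. rewrite cos_2a_sin. ring. Qed.

Lemma Rabs_cos_minus_1_le x : Rabs (cos x - 1) <= Rabs x.
Proof.
  replace (cos x - 1) with (- (1 - cos x)) by ring. rewrite Rabs_Ropp, one_minus_cos.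
  assert (H1 := Rabs_sin_le (x / 2)). assert (H2 := Rabs_sin_le_1 (x / 2)).
  rewrite Rabs_mult, Rabs_pos_eq, <- RPow_abs by lra.
  assert (Rabs (x / 2) = Rabs x / 2).
  { unfold Rdiv. rewrite Rabs_mult, Rabs_inv, (Rabs_pos_eq 2) by lra. auto. }
  assert (0 <= Rabs (sin (x / 2))) by apply Rabs_pos. nra.
Qed.

Lemma one_minus_cos_le x : 1 - cos x <= x ^ 2 / 2.
Proof.
  rewrite one_minus_cos. assert (H1 := Rabs_sin_le (x / 2)).
  assert (sin (x / 2) ^ 2 <= (x / 2) ^ 2).
  { rewrite <- (pow2_abs (sin _)), <- (pow2_abs (x / 2)). apply pow_incr. split; auto. apply Rabs_pos. }
  nra.
Qed.

Lemma Rabs_sin_plus_le a b : Rabs (sin (a + b)) <= Rabs (sin a) + Rabs (sin b).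
Proof.
  rewrite sin_plus. eapply Rle_trans; [apply Rabs_triang|]. rewrite !Rabs_mult.
  assert (H1 := Rabs_cos_le_1 a). assert (H2 := Rabs_cos_le_1 b).
  assert (0 <= Rabs (sin a)) by apply Rabs_pos. assert (0 <= Rabs (sin b)) by apply Rabs_pos. nra.
Qed.

Lemma Rabs_sin_INR_mult_le (n : nat) y : Rabs (sin (INR n * y)) <= INR n * Rabs (sin y).
Proof.
  induction n as [|n IH].
  - simpl. rewrite Rmult_0_l, sin_0, Rabs_R0. lra.
  - rewrite S_INR. replace ((INR n + 1) * y) with (INR n * y + y) by ring.
    eapply Rle_trans; [apply Rabs_sin_plus_le|]. lra.
Qed.

Lemma Rabs_sin_IZR_mult_le (u : Z) y : Rabs (sin (IZR u * y)) <= Rabs (IZR u) * Rabs (sin y).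
Proof.
  destruct (Z_le_gt_dec 0 u).
  - rewrite <- (Z2Nat.id u), <- INR_IZR_INZ, (Rabs_pos_eq (INR _)) by (auto || apply pos_INR).
    apply Rabs_sin_INR_mult_le.
  - replace (IZR u * y) with (- (IZR (- u) * y)) by (rewrite opp_IZR; ring).
    rewrite sin_neg, Rabs_Ropp. replace (Rabs (IZR u)) with (IZR (- u)).
    + rewrite <- (Z2Nat.id (- u)), <- INR_IZR_INZ by lia. apply Rabs_sin_INR_mult_le.
    + rewrite opp_IZR, Rabs_left; auto. apply IZR_lt. lia.
Qed.

Lemma sin_ge_quarter y : 0 <= y -> y <= PI / 2 -> y / 4 <= sin y.
Proof.
  intros H1 H2. assert (HP4 := PI_4).
  destruct (SIN y H1 ltac:(lra)) as [H _]. eapply Rle_trans; [|exact H].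
  assert (E : sin_lb y = y - y ^ 3 / 6 + y ^ 5 / 120 - y ^ 7 / 5040).
  { unfold sin_lb, sin_approx. cbn [sum_f_R0]. unfold sin_term. rewrite !INR_IZR_INZ.
    cbn -[IZR Rdiv pow Rmult]. unfold Rdiv. simpl pow. field. }
  rewrite E. set (z := y * y).
  assert (0 <= z <= 4) by (unfold z; nra).
  replace (y ^ 7) with (y * (z * z * z)) by (unfold z; ring).
  replace (y ^ 5) with (y * (z * z)) by (unfold z; ring).
  replace (y ^ 3) with (y * z) by (unfold z; ring).
  assert (0 <= z * z * (1 / 120 - z / 5040)) by (apply Rmult_le_pos; nra).
  assert (0 <= y * (3 / 4 - z / 6 + z * z / 120 - z * z * z / 5040)) by (apply Rmult_le_pos; nra).
  lra.
Qed.

Lemma sin_half_sq_ge th : - PI <= th <= PI -> th ^ 2 / 64 <= sin (th / 2) ^ 2.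
Proof.
  intros Hth.
  assert (Hs : Rabs th / 8 <= Rabs (sin (th / 2))).
  { destruct (Rle_dec 0 th).
    - rewrite Rabs_pos_eq by auto. assert (th / 2 / 4 <= sin (th / 2)) by (apply sin_ge_quarter; lra).
      rewrite Rabs_pos_eq; lra.
    - rewrite Rabs_left by lra. assert (H : - th / 2 / 4 <= sin (- th / 2)) by (apply sin_ge_quarter; lra).
      replace (- th / 2) with (- (th / 2)) in H by field. rewrite sin_neg in H.
      rewrite Rabs_left1; lra. }
  rewrite <- (pow2_abs (sin _)), <- (pow2_abs th).
  assert (0 <= Rabs th) by apply Rabs_pos.
  assert ((Rabs th / 8) ^ 2 <= Rabs (sin (th / 2)) ^ 2) by (apply pow_incr; lra). lra.
Qed.

Lemma Cmod_le_Rabs_sum z : Cmod z <= Rabs (fst z) + Rabs (snd z).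
Proof.
  assert (0 <= Rabs (fst z)) by apply Rabs_pos. assert (0 <= Rabs (snd z)) by apply Rabs_pos.
  unfold Cmod. apply Rsqr_incr_0_var; [|lra].
  rewrite Rsqr_sqrt by nra. unfold Rsqr.
  rewrite <- (pow2_abs (fst z)), <- (pow2_abs (snd z)). nra.
Qed.

Lemma Rabs_fourier_coef_le psi h k : continuity_C psi -> continuity h ->
  (forall t, - PI <= t <= PI -> Cmod (psi t) <= h t) ->
  Rabs (fourier_coef psi k) <= / (2 * PI) * RInt h (- PI) PI.
Proof.
  intros [Hp Hq] Ch Hb. unfold fourier_coef. assert (HPI := PI_RGT_0).
  rewrite Rabs_mult, Rabs_pos_eq by (apply Rlt_le, Rinv_0_lt_compat; lra).
  apply Rmult_le_compat_l; [apply Rlt_le, Rinv_0_lt_compat; lra|].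
  eapply Rle_trans; [apply abs_RInt_le; [lra|apply ex_RInt_continuity; solve_cont]|].
  apply RInt_le; [lra|apply ex_RInt_continuity; solve_cont|apply ex_RInt_continuity; auto|].
  intros t Ht. eapply Rle_trans; [|apply Hb; lra]. unfold Cmod.
  set (p := fst (psi t)). set (q := snd (psi t)). set (c := cos (IZR k * t)). set (s := sin (IZR k * t)).
  assert (Hcs : c * c + s * s = 1) by (unfold c, s; rewrite <- (sin2_cos2 (IZR k * t)); unfold Rsqr; ring).
  (* Cauchy-Schwarz: (p c + q s)^2 + (p s - q c)^2 = (p^2 + q^2)(c^2 + s^2) *)
  apply Rsqr_incr_0_var; [|apply sqrt_pos].
  rewrite Rsqr_sqrt, <- Rsqr_abs by nra. unfold Rsqr.
  assert (0 <= (p * s - q * c) ^ 2) by apply pow2_ge_0. nra.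
Qed.

Lemma INR_mult_pow_pred r n : INR n * r ^ Nat.pred n * r = INR n * r ^ n.
Proof. destruct n; simpl; ring. Qed.

Lemma INR_mult_pred_pow_sub2 r n :
  INR n * (INR n - 1) * r ^ (n - 2) * r = INR n * (INR n - 1) * r ^ Nat.pred n.
Proof. destruct n as [|[|n]]; simpl; try ring. replace (n - 0)%nat with n by lia. ring. Qed.

Section FourierPowBounds.

Variables (G G1 G2 : Z -> R) (t r s M : R).
Hypotheses (Hr : Cmod (fourier G t) <= r) (Hs : Cmod (fourier G1 t) <= s)
  (HM : Cmod (fourier G2 t) <= M) (r0 : 0 <= r) (s0 : 0 <= s).

Lemma Cmod_fourier_pow_le n : Cmod (fourier_pow G n t) <= r ^ n.
Proof.
  induction n as [|n IH]; cbn [fourier_pow].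
  - change (1, 0) with (RtoC 1). rewrite Cmod_1. simpl. lra.
  - rewrite Cmod_mult. simpl. rewrite Rmult_comm.
    apply Rmult_le_compat; auto; apply Cmod_ge_0.
Qed.

Lemma Cmod_fourier_pow_m1_le n : Cmod (fourier_pow_m1 G G1 n t) <= INR n * s * r ^ Nat.pred n.
Proof.
  induction n as [|n IH]; cbn [fourier_pow_m1].
  - change (0, 0) with (RtoC 0). rewrite Cmod_0. simpl. lra.
  - eapply Rle_trans; [apply Cmod_triangle|]. rewrite !Cmod_mult, S_INR.
    replace ((INR n + 1) * s * r ^ Nat.pred (S n)) with (r ^ n * s + INR n * s * r ^ Nat.pred n * r)
      by (replace (INR n * s * r ^ Nat.pred n * r) with (s * (INR n * r ^ Nat.pred n * r)) by ring;
          rewrite INR_mult_pow_pred; simpl; ring).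
    apply Rplus_le_compat; apply Rmult_le_compat; auto using Cmod_ge_0.
    apply Cmod_fourier_pow_le.
Qed.

Lemma Cmod_fourier_pow_m2_le n : Cmod (fourier_pow_m2 G G1 G2 n t) <=
  INR n * M * r ^ Nat.pred n + INR n * (INR n - 1) * s ^ 2 * r ^ (n - 2).
Proof.
  assert (M0 : 0 <= M) by (eapply Rle_trans; [apply Cmod_ge_0|eauto]).
  induction n as [|n IH]; cbn [fourier_pow_m2].
  - change (0, 0) with (RtoC 0). rewrite Cmod_0. simpl. lra.
  - assert (0 <= r ^ n) by (apply pow_le; auto).
    assert (0 <= r ^ Nat.pred n) by (apply pow_le; auto).
    assert (0 <= r ^ (n - 2)) by (apply pow_le; auto).
    assert (0 <= INR n) by apply pos_INR.
    assert (0 <= INR n * (INR n - 1)).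
    { destruct n as [|n']; [simpl; lra|]. rewrite S_INR. assert (0 <= INR n') by apply pos_INR. nra. }
    eapply Rle_trans; [apply Cmod_triangle|].
    eapply Rle_trans; [apply Rplus_le_compat_r, Cmod_triangle|].
    rewrite !Cmod_mult, Cmod_R, (Rabs_pos_eq 2), S_INR by lra.
    assert (Cmod (fourier_pow G n t) * Cmod (fourier G2 t) <= r ^ n * M)
      by (apply Rmult_le_compat; auto using Cmod_ge_0, Cmod_fourier_pow_le).
    assert (Cmod (fourier_pow_m1 G G1 n t) * Cmod (fourier G1 t) <= INR n * s * r ^ Nat.pred n * s)
      by (apply Rmult_le_compat; auto using Cmod_ge_0, Cmod_fourier_pow_m1_le).
    assert (Cmod (fourier_pow_m2 G G1 G2 n t) * Cmod (fourier G t) <=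
      (INR n * M * r ^ Nat.pred n + INR n * (INR n - 1) * s ^ 2 * r ^ (n - 2)) * r)
      by (apply Rmult_le_compat; auto using Cmod_ge_0).
    simpl Nat.pred. replace (S n - 2)%nat with (Nat.pred n) by lia.
    assert (E1 := INR_mult_pred_pow_sub2 r n). assert (E2 := INR_mult_pow_pred r n).
    replace ((INR n * M * r ^ Nat.pred n + INR n * (INR n - 1) * s ^ 2 * r ^ (n - 2)) * r)
      with (M * (INR n * r ^ Nat.pred n * r) + s ^ 2 * (INR n * (INR n - 1) * r ^ (n - 2) * r))
      in * by ring.
    rewrite E1, E2 in *. nra.
Qed.

End FourierPowBounds.

Definition sq_weight (G : Z -> R) (j : Z) : R := (1 + IZR j ^ 2) * Rabs (G j).

Lemma sq_weight_nonneg G j : 0 <= sq_weight G j.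
Proof.
  unfold sq_weight. apply Rmult_le_pos; [|apply Rabs_pos].
  assert (0 <= IZR j ^ 2) by apply pow2_ge_0. lra.
Qed.

Lemma Rabs_le_1_plus_sq x : Rabs x <= 1 + x ^ 2.
Proof.
  rewrite <- (pow2_abs x). assert (0 <= (Rabs x - 1) ^ 2) by apply pow2_ge_0.
  assert (0 <= Rabs x) by apply Rabs_pos. nra.
Qed.

Section SecondMoment.

Variable G : Z -> R.
Hypothesis HW : summable (sq_weight G).

Lemma summable_sq_weight : summable G.
Proof.
  apply summable_le with (sq_weight G); auto. intro j. unfold sq_weight.
  assert (0 <= IZR j ^ 2) by apply pow2_ge_0. assert (0 <= Rabs (G j)) by apply Rabs_pos. nra.
Qed.

Lemma summable_first_moment : summable (fun j => IZR j * G j).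
Proof.
  apply summable_le with (sq_weight G); auto. intro j. unfold sq_weight. rewrite Rabs_mult.
  assert (H1 := Rabs_le_1_plus_sq (IZR j)). assert (0 <= Rabs (G j)) by apply Rabs_pos. nra.
Qed.

Lemma summable_centred_moment1 m : summable (fun j => (IZR j - m) * G j).
Proof.
  apply summable_le with (fun j => (Rabs m + 1) * sq_weight G j); [|apply summable_scal; auto].
  intro j. unfold sq_weight. rewrite Rabs_mult.
  assert (H1 := Rabs_le_1_plus_sq (IZR j)). assert (0 <= Rabs (G j)) by apply Rabs_pos.
  assert (H2 := Rabs_triang (IZR j) (- m)). rewrite Rabs_Ropp in H2.
  assert (0 <= Rabs m) by apply Rabs_pos. assert (0 <= IZR j ^ 2) by apply pow2_ge_0.
  assert (Rabs (IZR j - m) <= (Rabs m + 1) * (1 + IZR j ^ 2)) by (unfold Rminus; nra). nra.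
Qed.

Lemma summable_centred_moment2_abs m : summable (fun j => (IZR j - m) ^ 2 * Rabs (G j)).
Proof.
  apply summable_le with (fun j => (2 * (1 + m ^ 2)) * sq_weight G j); [|apply summable_scal; auto].
  intro j. unfold sq_weight.
  rewrite Rabs_mult, (Rabs_pos_eq (_ ^ 2)), Rabs_Rabsolu by apply pow2_ge_0.
  assert (0 <= Rabs (G j)) by apply Rabs_pos. assert (0 <= (IZR j + m) ^ 2) by apply pow2_ge_0.
  assert (0 <= IZR j ^ 2) by apply pow2_ge_0. assert (0 <= m ^ 2) by apply pow2_ge_0.
  assert ((IZR j - m) ^ 2 <= 2 * (1 + m ^ 2) * (1 + IZR j ^ 2)) by nra. nra.
Qed.

Lemma summable_centred_moment2 m : summable (fun j => (IZR j - m) ^ 2 * G j).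
Proof.
  apply summable_le with (fun j => (IZR j - m) ^ 2 * Rabs (G j)); [|apply summable_centred_moment2_abs].
  intro j. rewrite Rabs_mult, (Rabs_pos_eq (_ ^ 2)) by apply pow2_ge_0. lra.
Qed.

Lemma Cmod_fourier_centred_moment2_le m t :
  Cmod (fourier (fun j => (IZR j - m) ^ 2 * G j) t) <=
    2 * zsum (fun j => (IZR j - m) ^ 2 * Rabs (G j)).
Proof.
  eapply Rle_trans; [apply Cmod_le_Rabs_sum|].
  unfold fourier, fourier_cos, fourier_sin; cbn [fst snd].
  assert (Hb : forall c j, Rabs c <= 1 ->
    Rabs ((IZR j - m) ^ 2 * G j * c) <= (IZR j - m) ^ 2 * Rabs (G j)).
  { intros c j Hc. rewrite !Rabs_mult, (Rabs_pos_eq (_ ^ 2)) by apply pow2_ge_0.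
    assert (0 <= (IZR j - m) ^ 2 * Rabs (G j))
      by (apply Rmult_le_pos; [apply pow2_ge_0|apply Rabs_pos]). nra. }
  assert (A1 := zsum_abs_le (fun j => (IZR j - m) ^ 2 * G j * cos (IZR j * t)) _
    (summable_centred_moment2_abs m) (fun j => Hb _ j (Rabs_cos_le_1 _))).
  assert (A2 := zsum_abs_le (fun j => (IZR j - m) ^ 2 * G j * sin (IZR j * t)) _
    (summable_centred_moment2_abs m) (fun j => Hb _ j (Rabs_sin_le_1 _))).
  lra.
Qed.

Lemma centred_moment1_weight_le m j :
  Rabs ((IZR j - m) * G j) * Rabs (IZR j) <= (Rabs m + 1) * sq_weight G j.
Proof.
  unfold sq_weight. rewrite Rabs_mult, <- (pow2_abs (IZR j)).
  assert (0 <= Rabs m) by apply Rabs_pos. assert (0 <= Rabs (G j)) by apply Rabs_pos.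
  set (x := Rabs (IZR j)). assert (0 <= x) by apply Rabs_pos.
  assert (Hz : Rabs (IZR j - m) <= x + Rabs m).
  { unfold x, Rminus. rewrite <- (Rabs_Ropp m). apply Rabs_triang. }
  assert (Rabs (IZR j - m) * x <= (x + Rabs m) * x) by (apply Rmult_le_compat_r; auto).
  assert (x <= 1 + x ^ 2) by (assert (0 <= (x - 1) ^ 2) by apply pow2_ge_0; nra).
  assert (Rabs m * x <= Rabs m * (1 + x ^ 2)) by (apply Rmult_le_compat_l; auto).
  assert (Rabs (IZR j - m) * x <= (Rabs m + 1) * (1 + x ^ 2)) by nra.
  replace (Rabs (IZR j - m) * Rabs (G j) * x) with (Rabs (G j) * (Rabs (IZR j - m) * x)) by ring.
  replace ((Rabs m + 1) * ((1 + x ^ 2) * Rabs (G j))) with (Rabs (G j) * ((Rabs m + 1) * (1 + x ^ 2))) by ring.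
  apply Rmult_le_compat_l; auto.
Qed.

Lemma zsum_centred_moment1 m :
  zsum G = 1 -> m = zsum (fun j => IZR j * G j) -> zsum (fun j => (IZR j - m) * G j) = 0.
Proof.
  intros HG1 Hm.
  rewrite (zsum_ext _ (fun j => IZR j * G j + (- m) * G j)) by (intro; ring).
  apply is_zsum_unique. replace 0 with (m + - m * 1) by ring.
  apply is_zsum_plus.
  - rewrite Hm. apply zsum_correct, summable_first_moment.
  - rewrite <- HG1. apply is_zsum_scal, zsum_correct, summable_sq_weight.
Qed.

End SecondMoment.

Lemma Cmod_fourier_mean_zero_le g w t :
  summable g -> summable w -> zsum g = 0 ->
  (forall j, Rabs (g j) * Rabs (IZR j) <= w j) ->
  Cmod (fourier g t) <= 2 * (zsum w * Rabs t).
Proof.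
  intros Hg Hw Hg0 Hgw.
  assert (Hwt : summable (fun j => Rabs t * w j)) by (apply summable_scal, Hw).
  assert (Ew : zsum (fun j => Rabs t * w j) = zsum w * Rabs t) by (rewrite zsum_scal; auto; ring).
  assert (Hbound : forall j x, Rabs x <= Rabs (IZR j * t) -> Rabs (g j * x) <= Rabs t * w j).
  { intros j x Hx. rewrite Rabs_mult. rewrite Rabs_mult in Hx. specialize (Hgw j).
    assert (0 <= Rabs (g j)) by apply Rabs_pos. assert (0 <= Rabs t) by apply Rabs_pos.
    assert (Rabs (g j) * Rabs x <= Rabs (g j) * (Rabs (IZR j) * Rabs t))
      by (apply Rmult_le_compat_l; auto). nra. }
  assert (A2 : Rabs (fourier_sin g t) <= zsum w * Rabs t).
  { rewrite <- Ew. apply zsum_abs_le; auto. intro j. apply Hbound, Rabs_sin_le. }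
  assert (A1 : Rabs (fourier_cos g t) <= zsum w * Rabs t).
  { assert (E : fourier_cos g t = zsum (fun j => g j * (cos (IZR j * t) - 1))).
    { unfold fourier_cos.
      rewrite <- (Rplus_0_r (zsum (fun j => g j * (cos (IZR j * t) - 1)))), <- Hg0.
      apply is_zsum_unique.
      eapply is_zsum_ext; [|apply is_zsum_plus; apply zsum_correct; [|exact Hg]].
      - intro j. cbv beta. ring.
      - apply summable_le with (fun j => 2 * Rabs (g j)); [|apply summable_scal, summable_abs, Hg].
        intro j. rewrite Rabs_mult. assert (H1 := Rabs_cos_le_1 (IZR j * t)).
        assert (Rabs (cos (IZR j * t) - 1) <= 2)
          by (eapply Rle_trans; [apply Rabs_triang|]; rewrite Rabs_Ropp, Rabs_R1; lra).
        assert (0 <= Rabs (g j)) by apply Rabs_pos. nra. }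
    rewrite E, <- Ew. apply zsum_abs_le; auto. intro j. apply Hbound, Rabs_cos_minus_1_le. }
  eapply Rle_trans; [apply Cmod_le_Rabs_sum|]. unfold fourier; cbn [fst snd]. lra.
Qed.

(** * Aperiodicity gives a quadratic gap below [|F^(t)| = 1] *)

Lemma prob_le_1 F k : prob F -> F k <= 1.
Proof.
  intros [HF [Hs H1]]. rewrite <- H1.
  eapply is_zsum_le; [apply (is_zsum_point (F k) k)|apply zsum_correct, Hs|].
  intro i. cbv beta. destruct (Z.eq_dec i k) as [->|]; [lra|apply HF].
Qed.

Lemma prob_pos F k : prob F -> F k <> 0 -> 0 < F k.
Proof. intros [HF _] Hk. destruct (HF k); auto. congruence. Qed.

Lemma prob_supp_exists F : prob F -> exists r, F r <> 0.
Proof.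
  intros [_ [_ H]]. apply Classical_Prop.NNPP. intros E.
  rewrite (zsum_ext _ (fun _ => 0)), (is_zsum_unique _ _ is_zsum_zero) in H; [lra|].
  intro r. destruct (Req_dec (F r) 0); auto. exfalso. eauto.
Qed.

Definition diff_comb (r : Z) (l : list (Z * Z)) : Z :=
  fold_right (fun p acc => (fst p * (snd p - r) + acc)%Z) 0%Z l.

Definition comb_weight (l : list (Z * Z)) : R :=
  fold_right (fun p acc => Rabs (IZR (fst p)) + acc) 0 l.

Lemma comb_weight_nonneg l : 0 <= comb_weight l.
Proof. induction l; simpl; [lra|]. assert (0 <= Rabs (IZR (fst a))) by apply Rabs_pos. lra. Qed.

Lemma diff_comb_app r l1 l2 : diff_comb r (l1 ++ l2) = (diff_comb r l1 + diff_comb r l2)%Z.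
Proof. induction l1; simpl; lia. Qed.

Lemma diff_comb_opp r l :
  diff_comb r (map (fun p => (- fst p, snd p)%Z) l) = (- diff_comb r l)%Z.
Proof. induction l; simpl; lia. Qed.

(* The set of values of [diff_comb r] over lists supported on [supp F] is a subgroup
   containing [supp (delta (-r) * F)], which aperiodicity says generates Z. *)
Lemma aperiodic_diff_comb_one F r : aperiodic F -> F r <> 0 ->
  exists l, (forall p, In p l -> F (snd p) <> 0) /\ diff_comb r l = 1%Z.
Proof.
  intros Hap Hr.
  set (H := fun z => exists l, (forall p, In p l -> F (snd p) <> 0) /\ diff_comb r l = z).
  apply (Hap (- r)%Z H).
  - exists nil. split; [intros p []|reflexivity].
  - intros a b [la [Ha1 <-]] [lb [Hb1 <-]].
    exists (la ++ map (fun p => (- fst p, snd p)%Z) lb). split.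
    + intros p Hp. apply in_app_or in Hp as [Hp|Hp]; auto.
      apply in_map_iff in Hp as [q [<- Hq]]. simpl. auto.
    + rewrite diff_comb_app, diff_comb_opp. lia.
  - intros x Hx. unfold supp in Hx. rewrite conv_delta_l in Hx.
    exists ((1, x - - r)%Z :: nil). split.
    + intros p [<-|[]]. simpl. auto.
    + unfold diff_comb. cbn [fold_right fst snd]. lia.
Qed.

Lemma Rabs_sin_diff_comb_le r l x sg :
  (forall p, In p l -> Rabs (sin (IZR (snd p - r) * x)) <= sg) ->
  Rabs (sin (IZR (diff_comb r l) * x)) <= comb_weight l * sg.
Proof.
  intros H. induction l as [|a l IH]; simpl.
  - rewrite Rmult_0_l, sin_0, Rabs_R0. lra.
  - rewrite plus_IZR, Rmult_plus_distr_r. eapply Rle_trans; [apply Rabs_sin_plus_le|].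
    rewrite mult_IZR, Rmult_assoc. eapply Rle_trans; [apply Rplus_le_compat_r, Rabs_sin_IZR_mult_le|].
    assert (H1 := H a (or_introl eq_refl)). assert (0 <= Rabs (IZR (fst a))) by apply Rabs_pos.
    assert (Rabs (IZR (fst a)) * Rabs (sin (IZR (snd a - r) * x)) <= Rabs (IZR (fst a)) * sg)
      by (apply Rmult_le_compat_l; auto).
    specialize (IH (fun p Hp => H p (or_intror Hp))). lra.
Qed.

Lemma list_pos_lower_bound {A} (f : A -> R) (l : list A) :
  (forall x, In x l -> 0 < f x) -> exists e, 0 < e /\ forall x, In x l -> e <= f x.
Proof.
  induction l as [|a l IH]; intros Hl.
  - exists 1. split; [lra|intros x []].
  - destruct IH as [e [He H]]; [intros x Hx; apply Hl; right; auto|].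
    exists (Rmin e (f a)). split.
    + apply Rmin_glb_lt; auto. apply Hl. left; auto.
    + intros x [<-|Hx]; [apply Rmin_r|]. eapply Rle_trans; [apply Rmin_l|auto].
Qed.

Lemma Cmod_eq_unit_projection (x y : R) :
  exists c s, c ^ 2 + s ^ 2 = 1 /\ c * x + s * y = Cmod (x, y).
Proof.
  unfold Cmod; simpl fst; simpl snd.
  set (r := sqrt (x ^ 2 + y ^ 2)).
  assert (Hr : r * r = x ^ 2 + y ^ 2) by (apply sqrt_sqrt; nra).
  destruct (Req_dec r 0) as [E|E].
  - exists 1, 0. split; [ring|]. rewrite E in Hr |- *. assert (x = 0) by nra. subst. ring.
  - exists (x / r), (y / r). split; field_simplify; auto; rewrite <- Hr; field; auto.
Qed.

Lemma unit_projection_le_1 c s u : c ^ 2 + s ^ 2 = 1 -> c * cos u + s * sin u <= 1.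
Proof.
  intros Hcs. assert (E := sin2_cos2 u). unfold Rsqr in E.
  assert (0 <= (c * sin u - s * cos u) ^ 2) by apply pow2_ge_0.
  assert ((c * cos u + s * sin u) ^ 2 <= 1) by nra. nra.
Qed.

Lemma sin_half_diff_sq_le c s u v : c ^ 2 + s ^ 2 = 1 ->
  sin ((u - v) / 2) ^ 2 <= (1 - (c * cos u + s * sin u)) + (1 - (c * cos v + s * sin v)).
Proof.
  intros Hcs. assert (E := one_minus_cos (u - v)). rewrite cos_minus in E.
  assert (E1 := sin2_cos2 u). assert (E2 := sin2_cos2 v). unfold Rsqr in E1, E2.
  assert (0 <= (cos u + cos v - 2 * c) ^ 2 + (sin u + sin v - 2 * s) ^ 2)
    by (apply Rplus_le_le_0_compat; apply pow2_ge_0).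
  nra.
Qed.

(* With (c, s) the unit vector along F^(t), 1 - |F^(t)| = sum_k F k (1 - x k) where
   x k = c cos(kt) + s sin(kt) <= 1; the two terms k = j, r already give the bound. *)
Lemma sin_sq_le_fourier_gap F j r t : prob F -> F j <> 0 -> F r <> 0 ->
  F j * F r * sin (IZR (j - r) * (t / 2)) ^ 2 <= 1 - Cmod (fourier F t).
Proof.
  intros HP Hj Hr. pose proof HP as [HF [Hs H1]].
  destruct (Cmod_eq_unit_projection (fourier_cos F t) (fourier_sin F t)) as [c [s [Hcs Hcs2]]].
  unfold fourier. rewrite <- Hcs2.
  set (x := fun k : Z => c * cos (IZR k * t) + s * sin (IZR k * t)).
  assert (Hx : forall k, x k <= 1) by (intro k; apply unit_projection_le_1, Hcs).
  assert (Z : is_zsum (fun k => F k * (1 - x k)) (1 - (c * fourier_cos F t + s * fourier_sin F t))).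
  { assert (Z1 := zsum_correct F Hs). rewrite H1 in Z1.
    assert (Z2 := is_zsum_scal (- c) _ _ (zsum_correct _ (summable_mult_cos F t Hs))).
    assert (Z3 := is_zsum_scal (- s) _ _ (zsum_correct _ (summable_mult_sin F t Hs))).
    replace (1 - (c * fourier_cos F t + s * fourier_sin F t)) with
      (1 + (- c * fourier_cos F t + - s * fourier_sin F t)) by ring.
    eapply is_zsum_ext; [|exact (is_zsum_plus _ _ _ _ Z1 (is_zsum_plus _ _ _ _ Z2 Z3))].
    intro k. unfold x. cbv beta. ring. }
  assert (Hnn : forall k, 0 <= F k * (1 - x k))
    by (intro k; apply Rmult_le_pos; [apply HF|specialize (Hx k); lra]).
  assert (Fj1 := prob_le_1 F j HP). assert (Fr1 := prob_le_1 F r HP).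
  assert (Fj0 := prob_pos F j HP Hj). assert (Fr0 := prob_pos F r HP Hr).
  destruct (Z.eq_dec j r) as [->|E].
  - rewrite Z.sub_diag, Rmult_0_l, sin_0. simpl. rewrite !Rmult_0_l, Rmult_0_r.
    eapply is_zsum_le; [exact is_zsum_zero|exact Z|auto].
  - assert (L : F j * (1 - x j) + F r * (1 - x r) <= 1 - (c * fourier_cos F t + s * fourier_sin F t)).
    { eapply is_zsum_le; [exact (is_zsum_plus _ _ _ _ (is_zsum_point (F j * (1 - x j)) j)
                                    (is_zsum_point (F r * (1 - x r)) r))|exact Z|].
      intro k. cbv beta.
      destruct (Z.eq_dec k j), (Z.eq_dec k r); subst; try congruence; try lra.
      specialize (Hnn k). lra. }
    assert (T := sin_half_diff_sq_le c s (IZR j * t) (IZR r * t) Hcs).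
    replace ((IZR j * t - IZR r * t) / 2) with (IZR (j - r) * (t / 2)) in T
      by (rewrite minus_IZR; field).
    fold (x j) (x r) in T.
    assert (Hxj := Hx j). assert (Hxr := Hx r).
    assert (0 <= (1 - F r) * (F j * (1 - x j))) by (apply Rmult_le_pos; nra).
    assert (0 <= (1 - F j) * (F r * (1 - x r))) by (apply Rmult_le_pos; nra).
    assert (F j * F r * sin (IZR (j - r) * (t / 2)) ^ 2 <= F j * F r * ((1 - x j) + (1 - x r)))
      by (apply Rmult_le_compat_l; nra).
    lra.
Qed.

Lemma aperiodic_fourier_gap F : prob F -> aperiodic F ->
  exists kap, 0 < kap /\ forall t, - PI <= t <= PI -> kap * t ^ 2 <= 1 - Cmod (fourier F t).
Proof.
  intros HP Hap.
  destruct (prob_supp_exists F HP) as [r Hr].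
  destruct (aperiodic_diff_comb_one F r Hap Hr) as [l [Hl Hcomb]].
  destruct (list_pos_lower_bound (fun p => F (snd p) * F r) l) as [e [He Hel]].
  { intros p Hp. apply Rmult_lt_0_compat; apply prob_pos; auto. }
  set (U := comb_weight l). assert (U0 : 0 <= U) by apply comb_weight_nonneg.
  assert (U2 : 0 <= U ^ 2) by apply pow2_ge_0.
  exists (e / (64 * (U ^ 2 + 1))). split; [apply Rdiv_lt_0_compat; lra|].
  intros t Ht. set (R1 := 1 - Cmod (fourier F t)).
  assert (R10 : 0 <= R1).
  { assert (H := sin_sq_le_fourier_gap F r r t HP Hr Hr).
    assert (0 <= F r * F r * sin (IZR (r - r) * (t / 2)) ^ 2)
      by (apply Rmult_le_pos; [apply Rmult_le_pos; apply HP|apply pow2_ge_0]).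
    unfold R1. lra. }
  set (sg := sqrt (R1 / e)).
  assert (Hsg : forall p, In p l -> Rabs (sin (IZR (snd p - r) * (t / 2))) <= sg).
  { intros p Hp. assert (Hpb := sin_sq_le_fourier_gap F (snd p) r t HP (Hl p Hp) Hr).
    assert (He' := Hel p Hp).
    assert (0 <= sin (IZR (snd p - r) * (t / 2)) ^ 2) by apply pow2_ge_0.
    unfold sg. rewrite <- (sqrt_pow2 (Rabs _)), pow2_abs by apply Rabs_pos.
    apply sqrt_le_1_alt. apply Rmult_le_reg_l with e; [lra|].
    replace (e * (R1 / e)) with R1 by (field; lra). fold R1 in Hpb. nra. }
  assert (HS := Rabs_sin_diff_comb_le r l (t / 2) sg Hsg).
  rewrite Hcomb, Rmult_1_l in HS. fold U in HS.
  assert (sg0 : 0 <= sg) by apply sqrt_pos.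
  assert (Hsg2 : sg ^ 2 = R1 / e) by (apply pow2_sqrt, Rdiv_le_0_compat; lra).
  assert (S2 : sin (t / 2) ^ 2 <= U ^ 2 * (R1 / e)).
  { rewrite <- Hsg2, <- Rpow_mult_distr, <- (pow2_abs (sin _)).
    apply pow_incr. split; auto. apply Rabs_pos. }
  assert (L := sin_half_sq_ge t Ht).
  assert (t ^ 2 * e <= 64 * (U ^ 2 + 1) * R1).
  { replace (U ^ 2 * (R1 / e)) with (U ^ 2 * R1 / e) in S2 by (field; lra).
    assert (t ^ 2 <= 64 * (U ^ 2 * R1 / e)) by lra.
    apply Rmult_le_compat_r with (r := e) in H; [|lra].
    replace (64 * (U ^ 2 * R1 / e) * e) with (64 * U ^ 2 * R1) in H by (field; lra). nra. }
  apply Rmult_le_reg_l with (64 * (U ^ 2 + 1)); [lra|].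
  replace (64 * (U ^ 2 + 1) * (e / (64 * (U ^ 2 + 1)) * t ^ 2)) with (t ^ 2 * e) by (field; lra).
  lra.
Qed.

Lemma pow_one_minus_bernoulli x N : 0 <= x <= 1 -> (1 - x) ^ N * (1 + INR N * x) <= 1.
Proof.
  intros Hx. induction N as [|N IH]; [simpl; lra|].
  rewrite S_INR. simpl pow.
  assert (0 <= (1 - x) ^ N) by (apply pow_le; lra).
  assert ((1 - x) * (1 + (INR N + 1) * x) <= 1 + INR N * x)
    by (assert (0 <= INR N) by apply pos_INR; nra).
  assert ((1 - x) ^ N * ((1 - x) * (1 + (INR N + 1) * x)) <= (1 - x) ^ N * (1 + INR N * x))
    by (apply Rmult_le_compat_l; auto).
  nra.
Qed.

Lemma pow_one_minus_le x N : 0 <= x <= 1 -> (1 - x) ^ N <= 2 / (1 + (INR N + 1) * x).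
Proof.
  intros Hx. assert (H := pow_one_minus_bernoulli x N Hx). assert (0 <= INR N) by apply pos_INR.
  assert (0 <= (1 - x) ^ N) by (apply pow_le; lra).
  apply Rmult_le_reg_r with (1 + (INR N + 1) * x); [nra|].
  unfold Rdiv. rewrite Rmult_assoc, Rinv_l by nra.
  assert ((1 - x) ^ N * (1 + (INR N + 1) * x) <= (1 - x) ^ N * (2 * (1 + INR N * x)))
    by (apply Rmult_le_compat_l; nra).
  lra.
Qed.

Lemma pow_one_minus_le_sq x N : 0 <= x <= 1 ->
  (1 - x) ^ N <= 4 / (1 + (INR (Nat.div2 N) + 1) * x) ^ 2.
Proof.
  intros Hx. set (M := Nat.div2 N).
  assert (HN : (2 * M <= N)%nat)
    by (unfold M; assert (H := Nat.div2_odd N); destruct (Nat.odd N); simpl in H; lia).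
  assert ((1 - x) ^ N <= ((1 - x) ^ M) ^ 2).
  { rewrite <- pow_mult. replace N with (M * 2 + (N - M * 2))%nat at 1 by lia. rewrite pow_add.
    assert ((1 - x) ^ (N - M * 2) <= 1) 
      by (rewrite <- (pow1 (N - M * 2)) at 2; apply pow_incr; lra).
    assert (0 <= (1 - x) ^ (M * 2)) by (apply pow_le; lra). nra. }
  assert (B := pow_one_minus_le x M Hx).
  assert (((1 - x) ^ M) ^ 2 <= (2 / (1 + (INR M + 1) * x)) ^ 2)
    by (apply pow_incr; split; [apply pow_le; lra|exact B]).
  assert (0 <= INR M) by apply pos_INR.
  replace (4 / (1 + (INR M + 1) * x) ^ 2) with ((2 / (1 + (INR M + 1) * x)) ^ 2) by (field; nra).
  lra.
Qed.

Lemma continuity_lorentzian b : 0 < b -> continuity (fun t => 1 / (1 + b * t ^ 2)).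
Proof.
  intros Hb x. assert (Hd : continuity (fun t => 1 + b * t ^ 2)) by solve_cont.
  apply continuity_pt_div; [apply cont_const|apply Hd|].
  assert (0 <= x ^ 2) by apply pow2_ge_0. nra.
Qed.

Lemma continuity_sq_lorentzian_sq b : 0 < b -> continuity (fun t => t ^ 2 / (1 + b * t ^ 2) ^ 2).
Proof.
  intros Hb x. assert (Hn : continuity (fun t => t ^ 2)) by solve_cont.
  assert (Hd : continuity (fun t => (1 + b * t ^ 2) ^ 2)) by solve_cont.
  apply continuity_pt_div; [apply Hn|apply Hd|].
  assert (0 <= x ^ 2) by apply pow2_ge_0. apply pow_nonzero. nra.
Qed.

Lemma RInt_lorentzian_le b : 0 < b ->
  RInt (fun t => 1 / (1 + b * t ^ 2)) (- PI) PI <= PI / sqrt b.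
Proof.
  intros Hb. assert (Sb : 0 < sqrt b) by (apply sqrt_lt_R0; auto).
  assert (Eb : sqrt b * sqrt b = b) by (apply sqrt_sqrt; lra).
  assert (D : forall x, Rmin (- PI) PI <= x <= Rmax (- PI) PI ->
     is_derive (fun t => atan (sqrt b * t) / sqrt b) x (1 / (1 + b * x ^ 2))).
  { intros x _. auto_derive; auto.
    replace (sqrt b * x * (sqrt b * x * 1)) with (sqrt b * sqrt b * x ^ 2) by ring. rewrite Eb.
    assert (0 <= x ^ 2) by apply pow2_ge_0. field. split; nra. }
  assert (C : forall x, Rmin (- PI) PI <= x <= Rmax (- PI) PI ->
     continuous (fun t => 1 / (1 + b * t ^ 2)) x)
    by (intros x _; apply continuity_pt_filterlim, continuity_lorentzian, Hb).
  rewrite (is_RInt_unique _ _ _ _ (is_RInt_derive _ _ _ _ D C)).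
  unfold minus, plus, opp; simpl.
  assert (A1 := atan_bound (sqrt b * PI)). assert (A2 := atan_bound (sqrt b * - PI)).
  apply Rmult_le_reg_r with (sqrt b); auto.
  unfold Rdiv. field_simplify; lra.
Qed.

Lemma RInt_sq_lorentzian_sq_le b : 0 < b ->
  RInt (fun t => t ^ 2 / (1 + b * t ^ 2) ^ 2) (- PI) PI <= PI / (2 * b * sqrt b).
Proof.
  intros Hb. assert (Sb : 0 < sqrt b) by (apply sqrt_lt_R0; auto).
  assert (Eb : sqrt b * sqrt b = b) by (apply sqrt_sqrt; lra).
  assert (D : forall x, Rmin (- PI) PI <= x <= Rmax (- PI) PI ->
     is_derive (fun t => (atan (sqrt b * t) / sqrt b - t / (1 + b * t ^ 2)) / (2 * b)) x
       (x ^ 2 / (1 + b * x ^ 2) ^ 2)).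
  { intros x _. assert (0 <= x ^ 2) by apply pow2_ge_0. assert (0 <= x * (x * 1)) by nra.
    auto_derive; [nra|].
    replace (sqrt b * x * (sqrt b * x * 1)) with (sqrt b * sqrt b * x ^ 2) by ring. rewrite Eb.
    field. repeat split; nra. }
  assert (C : forall x, Rmin (- PI) PI <= x <= Rmax (- PI) PI ->
     continuous (fun t => t ^ 2 / (1 + b * t ^ 2) ^ 2) x)
    by (intros x _; apply continuity_pt_filterlim, continuity_sq_lorentzian_sq, Hb).
  rewrite (is_RInt_unique _ _ _ _ (is_RInt_derive _ _ _ _ D C)).
  unfold minus, plus, opp; simpl.
  assert (A1 := atan_bound (sqrt b * PI)). assert (A2 := atan_bound (sqrt b * - PI)).
  assert (HP := PI_RGT_0). assert (0 <= PI * (PI * 1)) by nra.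
  assert (0 < 1 + b * (PI * (PI * 1))) by nra.
  assert (0 <= PI / (1 + b * (PI * (PI * 1)))) by (apply Rdiv_le_0_compat; lra).
  replace (- PI * (- PI * 1)) with (PI * (PI * 1)) by ring.
  apply Rmult_le_reg_r with (2 * b * sqrt b); [nra|].
  unfold Rdiv. field_simplify; try lra.
  assert (Hd : 0 < PI ^ 2 * b + 1) by nra.
  apply (Rmult_le_reg_r (PI ^ 2 * b + 1)); [lra|]. unfold Rdiv. rewrite Rmult_assoc, Rinv_l by lra.
  assert ((atan (sqrt b * PI) - atan (sqrt b * - PI)) * (PI ^ 2 * b + 1) <= PI * (PI ^ 2 * b + 1))
    by (apply Rmult_le_compat_r; lra).
  assert (0 <= sqrt b * PI) by nra.
  lra.
Qed.

Lemma sq_le_PI_sq t : - PI <= t <= PI -> t ^ 2 <= PI ^ 2.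
Proof.
  intros Ht. assert (HP := PI_RGT_0).
  rewrite <- (pow2_abs t), <- (pow2_abs PI). apply pow_incr. split; [apply Rabs_pos|].
  rewrite (Rabs_pos_eq PI) by lra. apply Rabs_le. lra.
Qed.

Lemma RInt_pow_one_minus_sq_le c N : 0 < c -> c * PI ^ 2 <= 1 ->
  RInt (fun t => (1 - c * t ^ 2) ^ N) (- PI) PI <= 2 * PI / sqrt ((INR N + 1) * c).
Proof.
  intros Hc HcP. assert (HP := PI_RGT_0). set (b := (INR N + 1) * c).
  assert (HN : 0 <= INR N) by apply pos_INR.
  assert (Hb : 0 < b) by (unfold b; nra).
  apply Rle_trans with (RInt (fun t => scal 2 (1 / (1 + b * t ^ 2))) (- PI) PI).
  - apply RInt_le; [lra|apply ex_RInt_continuity; solve_cont| |].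
    + apply ex_RInt_continuity, (cont_mult (fun _ => 2)); [apply cont_const|apply continuity_lorentzian, Hb].
    + intros t Ht. unfold scal; cbn -[pow]; unfold mult; cbn -[pow].
      assert (0 <= t ^ 2) by apply pow2_ge_0. assert (t ^ 2 <= PI ^ 2) by (apply sq_le_PI_sq; lra).
      assert (B := pow_one_minus_le (c * t ^ 2) N ltac:(split; nra)).
      replace (2 * (1 / (1 + b * t ^ 2))) with (2 / (1 + (INR N + 1) * (c * t ^ 2))); auto.
      unfold b. field. assert (0 <= (INR N + 1) * c * t ^ 2) by (apply Rmult_le_pos; nra).
      repeat split; nra.
  - rewrite (RInt_scal (V := R_CompleteNormedModule)) by (apply ex_RInt_continuity, continuity_lorentzian, Hb).
    unfold scal; cbn -[pow RInt]; unfold mult; cbn -[pow RInt].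
    assert (I := RInt_lorentzian_le b Hb). unfold Rdiv in *. lra.
Qed.

Lemma RInt_sq_pow_one_minus_sq_le c N : 0 < c -> c * PI ^ 2 <= 1 ->
  RInt (fun t => t ^ 2 * (1 - c * t ^ 2) ^ N) (- PI) PI <=
    2 * PI / (((INR (Nat.div2 N) + 1) * c) * sqrt ((INR (Nat.div2 N) + 1) * c)).
Proof.
  intros Hc HcP. assert (HP := PI_RGT_0). set (b := (INR (Nat.div2 N) + 1) * c).
  assert (HN : 0 <= INR (Nat.div2 N)) by apply pos_INR.
  assert (Hb : 0 < b) by (unfold b; nra).
  apply Rle_trans with (RInt (fun t => scal 4 (t ^ 2 / (1 + b * t ^ 2) ^ 2)) (- PI) PI).
  - apply RInt_le; [lra|apply ex_RInt_continuity; solve_cont| |].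
    + apply ex_RInt_continuity, (cont_mult (fun _ => 4));
        [apply cont_const|apply continuity_sq_lorentzian_sq, Hb].
    + intros t Ht. unfold scal; cbn -[pow]; unfold mult; cbn -[pow].
      assert (0 <= t ^ 2) by apply pow2_ge_0. assert (t ^ 2 <= PI ^ 2) by (apply sq_le_PI_sq; lra).
      assert (B := pow_one_minus_le_sq (c * t ^ 2) N ltac:(split; nra)).
      replace (4 * (t ^ 2 / (1 + b * t ^ 2) ^ 2))
        with (t ^ 2 * (4 / (1 + (INR (Nat.div2 N) + 1) * (c * t ^ 2)) ^ 2)).
      * apply Rmult_le_compat_l; auto.
      * unfold b. field. assert (0 <= (INR (Nat.div2 N) + 1) * c * t ^ 2) by (apply Rmult_le_pos; nra).
        repeat split; nra.
  - rewrite (RInt_scal (V := R_CompleteNormedModule))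
      by (apply ex_RInt_continuity, continuity_sq_lorentzian_sq, Hb).
    unfold scal; cbn -[pow RInt]; unfold mult; cbn -[pow RInt].
    assert (I := RInt_sq_lorentzian_sq_le b Hb). fold b.
    replace (2 * PI / (b * sqrt b)) with (4 * (PI / (2 * b * sqrt b))); [lra|].
    field. split; [|lra]. apply Rgt_not_eq, sqrt_lt_R0; auto.
Qed.

(** * Local limit bounds for convolution powers *)

Section ConvpowBounds.

Variables (G : Z -> R) (m c : R).
Hypothesis HW : summable (sq_weight G).
Hypothesis Hmass : zsum G = 1.
Hypothesis Hmean : m = zsum (fun j => IZR j * G j).
Hypothesis Hc : 0 < c.
Hypothesis HcPI : c * PI ^ 2 <= 1.
Hypothesis Hgap : forall t, - PI <= t <= PI -> Cmod (fourier G t) <= 1 - c * t ^ 2.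

Let G1 := fun j => (IZR j - m) * G j.
Let G2 := fun j => (IZR j - m) ^ 2 * G j.
Definition moment1_const := 2 * ((Rabs m + 1) * zsum (sq_weight G)).
Definition moment2_const := 2 * zsum (fun j => (IZR j - m) ^ 2 * Rabs (G j)).

Lemma moment1_const_nonneg : 0 <= moment1_const.
Proof.
  unfold moment1_const. assert (0 <= Rabs m) by apply Rabs_pos.
  assert (0 <= zsum (sq_weight G)) by (apply zsum_nonneg; auto; apply sq_weight_nonneg).
  nra.
Qed.

Lemma moment2_const_nonneg : 0 <= moment2_const.
Proof.
  unfold moment2_const. assert (0 <= zsum (fun j => (IZR j - m) ^ 2 * Rabs (G j))); [|lra].
  apply zsum_nonneg; [apply summable_centred_moment2_abs, HW|].
  intro j. apply Rmult_le_pos; [apply pow2_ge_0|apply Rabs_pos].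
Qed.

Lemma Cmod_fourier_pow_gap_le t n : - PI <= t <= PI ->
  Cmod (fourier_pow G n t) <= (1 - c * t ^ 2) ^ n /\
  Cmod (fourier_pow_m1 G G1 n t) <= INR n * (moment1_const * Rabs t) * (1 - c * t ^ 2) ^ Nat.pred n /\
  Cmod (fourier_pow_m2 G G1 G2 n t) <= INR n * moment2_const * (1 - c * t ^ 2) ^ Nat.pred n +
     INR n * (INR n - 1) * (moment1_const * Rabs t) ^ 2 * (1 - c * t ^ 2) ^ (n - 2).
Proof.
  intros Ht.
  assert (Hr : Cmod (fourier G t) <= 1 - c * t ^ 2) by auto.
  assert (Hs : Cmod (fourier G1 t) <= moment1_const * Rabs t).
  { unfold moment1_const. rewrite <- (zsum_scal (Rabs m + 1) (sq_weight G) HW), Rmult_assoc.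
    apply Cmod_fourier_mean_zero_le.
    + apply summable_centred_moment1, HW.
    + apply summable_scal, HW.
    + apply zsum_centred_moment1; auto.
    + intro j. apply centred_moment1_weight_le. }
  assert (HM := Cmod_fourier_centred_moment2_le G HW m t).
  assert (r0 : 0 <= 1 - c * t ^ 2) by (eapply Rle_trans; [apply Cmod_ge_0|exact Hr]).
  assert (s0 : 0 <= moment1_const * Rabs t)
    by (apply Rmult_le_pos; [apply moment1_const_nonneg|apply Rabs_pos]).
  split; [|split].
  - apply Cmod_fourier_pow_le; auto.
  - apply (Cmod_fourier_pow_m1_le G G1 t); auto.
  - apply (Cmod_fourier_pow_m2_le G G1 G2 t); auto.
Qed.

Lemma convpow_sup_le n k : Rabs (convpow G n k) <= 1 / sqrt ((INR n + 1) * c).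
Proof.
  assert (HP := PI_RGT_0). assert (HG := summable_sq_weight G HW).
  rewrite (convpow_fourier G n k HG).
  eapply Rle_trans.
  { apply (Rabs_fourier_coef_le _ (fun t => (1 - c * t ^ 2) ^ n)); [auto with cont|solve_cont|].
    intros t Ht. apply (Cmod_fourier_pow_gap_le t n Ht). }
  apply Rle_trans with (/ (2 * PI) * (2 * PI / sqrt ((INR n + 1) * c))).
  - apply Rmult_le_compat_l; [apply Rlt_le, Rinv_0_lt_compat; lra|].
    apply RInt_pow_one_minus_sq_le; auto.
  - right. field. split; [|lra]. apply Rgt_not_eq, sqrt_lt_R0.
    assert (0 <= INR n) by apply pos_INR. nra.
Qed.

Lemma convpow_moment2_le n k : (1 <= n)%nat ->
  let b := (INR (Nat.div2 (n - 2)) + 1) * c in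
  Rabs ((IZR k - INR n * m) ^ 2 * convpow G n k) <=
    INR n * moment2_const / sqrt (INR n * c) +
    INR n * (INR n - 1) * moment1_const ^ 2 / (b * sqrt b).
Proof.
  intros Hn b. assert (HP := PI_RGT_0). assert (HG := summable_sq_weight G HW).
  assert (Hn1 : 1 <= INR n) by (apply (le_INR 1); auto).
  assert (Hb : 0 < b) by (unfold b; assert (0 <= INR (Nat.div2 (n - 2))) by apply pos_INR; nra).
  set (K := moment1_const). set (M := moment2_const).
  assert (K0 : 0 <= K) by apply moment1_const_nonneg. assert (M0 : 0 <= M) by apply moment2_const_nonneg.
  rewrite (convpow_m2_fourier G m n k HG (summable_centred_moment1 G HW m)
    (summable_centred_moment2 G HW m)).
  set (h1 := fun t => (1 - c * t ^ 2) ^ Nat.pred n).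
  set (h2 := fun t => t ^ 2 * (1 - c * t ^ 2) ^ (n - 2)).
  assert (C1 : continuity h1) by (unfold h1; solve_cont).
  assert (C2 : continuity h2) by (unfold h2; solve_cont).
  eapply Rle_trans.
  { apply (Rabs_fourier_coef_le _
      (fun t => plus (scal (INR n * M) (h1 t)) (scal (INR n * (INR n - 1) * K ^ 2) (h2 t)))).
    - auto with cont.
    - apply continuity_C_fourier_pow_m2; auto.
      + apply summable_centred_moment1, HW.
      + apply summable_centred_moment2, HW.
    - unfold plus, scal; simpl; unfold mult; simpl. apply cont_plus; solve_cont.
    - intros t Ht. destruct (Cmod_fourier_pow_gap_le t n Ht) as (_ & _ & Hm2).
      eapply Rle_trans; [exact Hm2|]. rewrite Rpow_mult_distr, pow2_abs.
      unfold plus, scal, h1, h2, K, M; simpl; unfold mult; simpl. right. ring. }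
  rewrite (RInt_plus (V := R_CompleteNormedModule)), !(RInt_scal (V := R_CompleteNormedModule)).
  2, 3: apply ex_RInt_continuity; assumption.
  2, 3: apply ex_RInt_continuity; unfold scal; simpl; unfold mult; simpl; solve_cont.
  unfold plus, scal; simpl; unfold mult; simpl.
  assert (I1 := RInt_pow_one_minus_sq_le c (Nat.pred n) Hc HcPI).
  replace (INR (Nat.pred n) + 1) with (INR n) in I1
    by (destruct n; [lia|simpl Nat.pred; rewrite S_INR; ring]).
  assert (I2 := RInt_sq_pow_one_minus_sq_le c (n - 2) Hc HcPI). fold b in I2.
  assert (0 <= INR n * (INR n - 1) * K ^ 2) by (apply Rmult_le_pos; [nra|apply pow2_ge_0]).
  assert (0 <= INR n * M) by nra.
  apply Rle_trans with (/ (2 * PI) * (INR n * M * (2 * PI / sqrt (INR n * c)) +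
                        INR n * (INR n - 1) * K ^ 2 * (2 * PI / (b * sqrt b)))).
  - apply Rmult_le_compat_l; [apply Rlt_le, Rinv_0_lt_compat; lra|].
    apply Rplus_le_compat; apply Rmult_le_compat_l; auto.
  - right. assert (0 < sqrt b) by (apply sqrt_lt_R0; auto).
    assert (0 < sqrt (INR n * c)) by (apply sqrt_lt_R0; nra). field. repeat split; nra.
Qed.

Lemma convpow_scaled_sup_le n k : (1 <= n)%nat ->
  Rabs (convpow G n k) * INR n <= sqrt (INR n) / sqrt c.
Proof.
  intros Hn. assert (Hn1 : 1 <= INR n) by (apply (le_INR 1); auto).
  assert (sqrt (INR n * c) <= sqrt ((INR n + 1) * c)) by (apply sqrt_le_1_alt; nra).
  rewrite (sqrt_mult (INR n) c) in H by lra.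
  set (L := sqrt (INR n)) in *. set (q := sqrt c) in *.
  assert (HL : L * L = INR n) by (apply sqrt_sqrt; lra).
  assert (0 < L) by (apply sqrt_lt_R0; lra). assert (0 < q) by (apply sqrt_lt_R0; lra).
  apply Rle_trans with (1 / (L * q) * INR n).
  - apply Rmult_le_compat_r; [lra|]. eapply Rle_trans; [apply convpow_sup_le|].
    unfold Rdiv. rewrite !Rmult_1_l. apply Rinv_le_contravar; [nra|auto].
  - right. rewrite <- HL. field. lra.
Qed.

Lemma INR_mult_pred_le_div2 n : (1 <= n)%nat ->
  let b := INR (Nat.div2 (n - 2)) + 1 in
  INR n * (INR n - 1) <= 4 * sqrt (INR n) * (b * sqrt b).
Proof.
  intros Hn b. assert (Hn1 : 1 <= INR n) by (apply (le_INR 1); auto).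
  assert (Hb : INR n - 1 <= 2 * b).
  { assert (H := Nat.div2_odd (n - 2)).
    assert (HN : (n <= 2 * Nat.div2 (n - 2) + 3)%nat) by (destruct (Nat.odd (n - 2)); simpl in H; lia).
    apply le_INR in HN. rewrite plus_INR, mult_INR in HN. simpl in HN. unfold b. lra. }
  assert (Hb1 : 1 <= b) by (unfold b; assert (0 <= INR (Nat.div2 (n - 2))) by apply pos_INR; lra).
  set (L := sqrt (INR n)). set (S := sqrt b).
  assert (HL : L * L = INR n) by (apply sqrt_sqrt; lra).
  assert (HS : S * S = b) by (apply sqrt_sqrt; lra).
  assert (L0 : 0 < L) by (apply sqrt_lt_R0; lra). assert (S0 : 0 < S) by (apply sqrt_lt_R0; lra).
  assert (LS : L <= 2 * S) by nra.
  rewrite <- HL, <- HS in *.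
  assert (L * L * (L * L - 1) <= L * L * (2 * (S * S))) by (apply Rmult_le_compat_l; nra).
  assert (L * L * (2 * (S * S)) <= L * (2 * S) * (2 * (S * S)))
    by (apply Rmult_le_compat_r; [nra|apply Rmult_le_compat_l; lra]).
  nra.
Qed.

Lemma convpow_scaled_moment2_le n k : (1 <= n)%nat ->
  Rabs ((IZR k - INR n * m) ^ 2 * convpow G n k) <=
    sqrt (INR n) * (moment2_const / sqrt c + 4 * moment1_const ^ 2 / (c * sqrt c)).
Proof.
  intros Hn. eapply Rle_trans; [apply convpow_moment2_le, Hn|]. cbv zeta.
  assert (Hn1 : 1 <= INR n) by (apply (le_INR 1); auto).
  assert (HB := INR_mult_pred_le_div2 n Hn). cbv zeta in HB.
  set (b := INR (Nat.div2 (n - 2)) + 1) in *.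
  assert (Hb : 1 <= b) by (unfold b; assert (0 <= INR (Nat.div2 (n - 2))) by apply pos_INR; lra).
  set (L := sqrt (INR n)). set (q := sqrt c).
  assert (HL : L * L = INR n) by (apply sqrt_sqrt; lra).
  assert (L0 : 0 < L) by (apply sqrt_lt_R0; lra). assert (q0 : 0 < q) by (apply sqrt_lt_R0; lra).
  assert (Sb : 0 < sqrt b) by (apply sqrt_lt_R0; lra).
  assert (K2 : 0 <= moment1_const ^ 2) by apply pow2_ge_0.
  rewrite (sqrt_mult (INR n) c), (sqrt_mult b c) by lra. fold L q.
  assert (T : INR n * (INR n - 1) * moment1_const ^ 2 / (b * c * (sqrt b * q)) <=
              4 * L * moment1_const ^ 2 / (c * q)).
  { replace (INR n * (INR n - 1) * moment1_const ^ 2 / (b * c * (sqrt b * q)))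
      with (INR n * (INR n - 1) * (moment1_const ^ 2 / (b * sqrt b * (c * q)))) by (field; nra).
    replace (4 * L * moment1_const ^ 2 / (c * q))
      with (4 * L * (b * sqrt b) * (moment1_const ^ 2 / (b * sqrt b * (c * q)))) by (field; nra).
    apply Rmult_le_compat_r; auto. apply Rdiv_le_0_compat; auto. apply Rmult_lt_0_compat; nra. }
  replace (INR n * moment2_const / (L * q)) with (L * moment2_const / q) by (rewrite <- HL; field; lra).
  replace (L * (moment2_const / q + 4 * moment1_const ^ 2 / (c * q)))
    with (L * moment2_const / q + 4 * L * moment1_const ^ 2 / (c * q)) by (field; lra).
  lra.
Qed.

Lemma convpow_weighted_le n k : (1 <= n)%nat ->
  Rabs (convpow G n k) * (INR n + (IZR k - INR n * m) ^ 2) <=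
    sqrt (INR n) * ((1 + moment2_const) / sqrt c + 4 * moment1_const ^ 2 / (c * sqrt c)).
Proof.
  intros Hn. assert (T1 := convpow_scaled_sup_le n k Hn).
  assert (T2 := convpow_scaled_moment2_le n k Hn).
  rewrite Rabs_mult, (Rabs_pos_eq (_ ^ 2)) in T2 by apply pow2_ge_0.
  assert (0 < sqrt c) by (apply sqrt_lt_R0; lra).
  replace (sqrt (INR n) * ((1 + moment2_const) / sqrt c + 4 * moment1_const ^ 2 / (c * sqrt c)))
    with (sqrt (INR n) / sqrt c + sqrt (INR n) * (moment2_const / sqrt c + 4 * moment1_const ^ 2 / (c * sqrt c)))
    by (field; lra).
  lra.
Qed.

End ConvpowBounds.

(* Each Lorentzian value is dominated by an atan increment over a unit window; these
   telescope, so the whole sum is at most the total variation π of atan. *)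
Lemma lorentzian_le_atan_diff L t : 1 <= L ->
  L / (L ^ 2 + t ^ 2) <= 2 * (atan ((t + 1 / 2) / L) - atan ((t - 1 / 2) / L)).
Proof.
  intros HL.
  destruct (MVT_cor2 atan (fun x => / (1 + x ^ 2)) ((t - 1 / 2) / L) ((t + 1 / 2) / L))
    as [xi [E [H1 H2]]].
  { apply Rmult_lt_compat_r; [apply Rinv_0_lt_compat|]; lra. }
  { intros. apply derivable_pt_lim_atan. }
  rewrite E. set (y := L * xi).
  assert (Hy1 : t - 1 / 2 < y).
  { unfold y. apply Rmult_lt_compat_l with (r := L) in H1; [|lra]. field_simplify in H1; lra. }
  assert (Hy2 : y < t + 1 / 2).
  { unfold y. apply Rmult_lt_compat_l with (r := L) in H2; [|lra]. field_simplify in H2; lra. }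
  assert ((y - t) ^ 2 <= 1 / 4) by nra. assert (0 <= (y - 2 * t) ^ 2) by apply pow2_ge_0.
  assert (Exi : xi = y / L) by (unfold y; field; lra). rewrite Exi.
  replace ((t + 1 / 2) / L - (t - 1 / 2) / L) with (1 / L) by (field; lra).
  assert (0 <= t ^ 2) by apply pow2_ge_0. assert (0 <= y ^ 2) by apply pow2_ge_0.
  replace (2 * (/ (1 + (y / L) ^ 2) * (1 / L))) with (2 * L / (L ^ 2 + y ^ 2)) by (field; split; nra).
  assert (L ^ 2 + y ^ 2 <= 2 * (L ^ 2 + t ^ 2)) by nra.
  assert (/ (2 * (L ^ 2 + t ^ 2)) <= / (L ^ 2 + y ^ 2)) by (apply Rinv_le_contravar; nra).
  unfold Rdiv. replace (/ (L ^ 2 + t ^ 2)) with (2 * / (2 * (L ^ 2 + t ^ 2))) by (field; nra).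
  nra.
Qed.

Lemma sum_n_telescope (phi : nat -> R) c N :
  sum_n (fun i => c * (phi (S i) - phi i)) N = c * (phi (S N) - phi O).
Proof.
  induction N as [|N IH]; [now rewrite sum_O|].
  rewrite sum_Sn, IH. unfold plus; simpl. ring.
Qed.

Lemma Series_le_of_sum_n_le (a : nat -> R) B :
  (forall n, 0 <= a n) -> (forall N, sum_n a N <= B) -> Series a <= B.
Proof.
  intros Ha HB. assert (E : ex_finite_lim_seq (sum_n a)).
  { apply ex_finite_lim_seq_incr with B; auto.
    intro n. rewrite sum_Sn. unfold plus; simpl. specialize (Ha (S n)). lra. }
  destruct E as [l Hl]. unfold Series. rewrite (is_lim_seq_unique _ _ Hl).
  change (Rbar_le l B). eapply is_lim_seq_le; [|exact Hl|apply is_lim_seq_const]. auto.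
Qed.

Lemma Series_lorentzian_le (g : nat -> R) D L u : 1 <= L -> 0 <= D ->
  (forall i, Rabs (g i) <= D * (L / (L ^ 2 + (INR i + u) ^ 2))) ->
  Series (fun i => Rabs (g i)) <= 2 * PI * D.
Proof.
  intros HL HD Hg. apply Series_le_of_sum_n_le; [intro; apply Rabs_pos|]. intro N.
  set (phi := fun i : nat => atan ((INR i + u - 1 / 2) / L)).
  apply Rle_trans with (sum_n (fun i => 2 * D * (phi (S i) - phi i)) N).
  - apply sum_n_m_le. intro i. eapply Rle_trans; [apply Hg|].
    replace (2 * D * (phi (S i) - phi i)) with (D * (2 * (phi (S i) - phi i))) by ring.
    apply Rmult_le_compat_l; auto.
    unfold phi. rewrite S_INR.
    replace (INR i + 1 + u - 1 / 2) with ((INR i + u) + 1 / 2) by lra.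
    replace (INR i + u - 1 / 2) with ((INR i + u) - 1 / 2) by lra.
    apply lorentzian_le_atan_diff, HL.
  - rewrite sum_n_telescope. unfold phi.
    assert (B1 := atan_bound ((INR (S N) + u - 1 / 2) / L)).
    assert (B2 := atan_bound ((INR 0 + u - 1 / 2) / L)).
    assert (2 * D * (atan ((INR (S N) + u - 1 / 2) / L) - atan ((INR 0 + u - 1 / 2) / L))
      <= 2 * D * PI) by (apply Rmult_le_compat_l; lra).
    lra.
Qed.

Lemma L1norm_le_of_lorentzian_bound (g : Z -> R) D L mu : 1 <= L -> 0 <= D ->
  (forall k, Rabs (g k) <= D * (L / (L ^ 2 + (IZR k - mu) ^ 2))) ->
  L1norm g <= 4 * PI * D.
Proof.
  intros HL HD Hg. unfold L1norm, zsum.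
  assert (Series (zpos (fun k => Rabs (g k))) <= 2 * PI * D).
  { apply (Series_lorentzian_le _ D L (- mu)); auto. intro i. unfold zpos.
    replace (INR i + - mu) with (IZR (Z.of_nat i) - mu) by (rewrite <- INR_IZR_INZ; ring). apply Hg. }
  assert (Series (zneg (fun k => Rabs (g k))) <= 2 * PI * D).
  { apply (Series_lorentzian_le _ D L (1 + mu)); auto. intro i. unfold zneg.
    replace ((INR i + (1 + mu)) ^ 2) with ((IZR (- Z.of_nat (S i)) - mu) ^ 2)
      by (rewrite opp_IZR, <- INR_IZR_INZ, S_INR; ring).
    apply Hg. }
  lra.
Qed.

Theorem convpow_L1_bounded G c :
  summable (sq_weight G) -> zsum G = 1 -> 0 < c -> c * PI ^ 2 <= 1 ->
  (forall t, - PI <= t <= PI -> Cmod (fourier G t) <= 1 - c * t ^ 2) ->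
  exists M, forall n, L1norm (convpow G n) <= M.
Proof.
  intros HW Hmass Hc HcPI Hgap.
  set (m := zsum (fun j => IZR j * G j)).
  set (D := (1 + moment2_const G m) / sqrt c + 4 * moment1_const G m ^ 2 / (c * sqrt c)).
  assert (D0 : 0 <= D).
  { assert (0 < sqrt c) by (apply sqrt_lt_R0; auto).
    assert (0 <= moment2_const G m) by (apply moment2_const_nonneg; auto).
    assert (0 <= moment1_const G m ^ 2) by apply pow2_ge_0.
    unfold D. apply Rplus_le_le_0_compat; apply Rdiv_le_0_compat; nra. }
  exists (Rmax 1 (4 * PI * D)). intros [|n].
  - simpl. rewrite L1norm_delta0. apply Rmax_l.
  - eapply Rle_trans; [|apply Rmax_r].
    assert (Hn : 1 <= INR (S n)) by (apply (le_INR 1); lia).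
    set (L := sqrt (INR (S n))).
    assert (HL2 : L ^ 2 = INR (S n)) by (apply pow2_sqrt; lra).
    assert (HL : 1 <= L) by (rewrite <- sqrt_1; apply sqrt_le_1_alt; lra).
    apply (L1norm_le_of_lorentzian_bound _ D L (INR (S n) * m)); auto.
    intro k. rewrite HL2.
    assert (0 < INR (S n) + (IZR k - INR (S n) * m) ^ 2)
      by (assert (0 <= (IZR k - INR (S n) * m) ^ 2) by apply pow2_ge_0; lra).
    apply Rmult_le_reg_r with (INR (S n) + (IZR k - INR (S n) * m) ^ 2); auto.
    replace (D * (L / (INR (S n) + (IZR k - INR (S n) * m) ^ 2)) * (INR (S n) + (IZR k - INR (S n) * m) ^ 2))
      with (L * D) by (field; lra).
    apply convpow_weighted_le; auto. lia.
Qed.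

(** * Removing an atom at the origin *)

Definition delazy (F : Z -> R) (a : R) : Z -> R := fun j => (F j - a * delta 0 j) / (1 - a).

Lemma fourier_cos_prob_ge F t : prob F -> summable (fun k => IZR k ^ 2 * F k) ->
  1 - zsum (fun k => IZR k ^ 2 * F k) * t ^ 2 / 2 <= fourier_cos F t.
Proof.
  intros [HF [Hs H1]] Hsq.
  assert (Z1 := zsum_correct F Hs). rewrite H1 in Z1.
  assert (Z2 := is_zsum_scal (-1) _ _ (zsum_correct _ (summable_mult_cos F t Hs))).
  assert (Z4 := is_zsum_scal (t ^ 2 / 2) _ _ (zsum_correct _ Hsq)).
  assert (1 + -1 * fourier_cos F t <= t ^ 2 / 2 * zsum (fun k => IZR k ^ 2 * F k)); [|lra].
  eapply is_zsum_le; [exact (is_zsum_plus _ _ _ _ Z1 Z2)|exact Z4|]. intro k. cbv beta.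
  assert (H := one_minus_cos_le (IZR k * t)). assert (0 <= F k) by apply HF.
  replace ((IZR k * t) ^ 2 / 2) with (t ^ 2 / 2 * IZR k ^ 2) in H by field.
  nra.
Qed.

Lemma summable_delazy_sq_weight F a : prob F -> summable (fun k => IZR k ^ 2 * F k) -> a < 1 ->
  0 <= a -> summable (sq_weight (delazy F a)).
Proof.
  intros [HF [Hs _]] Hsq Ha1 Ha0.
  apply summable_le with
    (fun j => / (1 - a) * ((F j + IZR j ^ 2 * F j) + a * ((1 + IZR j ^ 2) * delta 0 j))).
  - intro j. rewrite Rabs_pos_eq by apply sq_weight_nonneg. unfold sq_weight, delazy.
    assert (Hd : 0 <= delta 0 j) by (unfold delta; destruct (Z.eq_dec j 0); lra).
    assert (Hj : 0 <= IZR j ^ 2) by apply pow2_ge_0. assert (HFj := HF j).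
    assert (Hi : 0 < / (1 - a)) by (apply Rinv_0_lt_compat; lra).
    unfold Rdiv. rewrite Rabs_mult, (Rabs_pos_eq (/ (1 - a))) by lra.
    assert (Rabs (F j - a * delta 0 j) <= F j + a * delta 0 j).
    { eapply Rle_trans; [apply Rabs_triang|]. rewrite Rabs_Ropp, Rabs_mult, !Rabs_pos_eq; lra. }
    replace (/ (1 - a) * (F j + IZR j ^ 2 * F j + a * ((1 + IZR j ^ 2) * delta 0 j)))
      with ((1 + IZR j ^ 2) * (/ (1 - a) * (F j + a * delta 0 j))) by ring.
    apply Rmult_le_compat_l; [lra|]. rewrite Rmult_comm. apply Rmult_le_compat_l; lra.
  - apply summable_scal, summable_plus; [apply summable_plus; auto|].
    apply summable_scal, (summable_single _ 0%Z). intros k Hk. rewrite delta_neq; auto. ring.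
Qed.

Lemma zsum_delazy F a : prob F -> a <> 1 -> zsum (delazy F a) = 1.
Proof.
  intros [_ [Hs H1]] Ha. apply is_zsum_unique.
  assert (Z1 := zsum_correct F Hs). rewrite H1 in Z1.
  assert (Zd : is_zsum (delta 0) 1).
  { replace 1 with (delta 0 0) by (unfold delta; simpl; auto). apply is_zsum_single, delta_neq. }
  assert (Z3 := is_zsum_scal (/ (1 - a)) _ _ (is_zsum_plus _ _ _ _ Z1 (is_zsum_scal (- a) _ _ Zd))).
  replace 1 with (/ (1 - a) * (1 + - a * 1)) by (field; lra).
  eapply is_zsum_ext; [|exact Z3]. intro k. unfold delazy. cbv beta. field. lra.
Qed.

Lemma fourier_delazy F a t : summable F -> a <> 1 ->
  fourier_cos (delazy F a) t = (fourier_cos F t - a) / (1 - a) /\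
  fourier_sin (delazy F a) t = fourier_sin F t / (1 - a).
Proof.
  intros HF Ha.
  assert (Hd : forall tr : R -> R, is_zsum (fun j => delta 0 j * tr (IZR j * t)) (tr 0)).
  { intro tr. replace (tr 0) with (delta 0 0 * tr (IZR 0 * t)) by (unfold delta; simpl; rewrite Rmult_0_l; ring).
    apply (is_zsum_single (fun j => delta 0 j * tr (IZR j * t))). intros k Hk. rewrite delta_neq; auto. ring. }
  split; apply is_zsum_unique.
  - assert (Z := is_zsum_scal (/ (1 - a)) _ _ (is_zsum_plus _ _ _ _
      (zsum_correct _ (summable_mult_cos F t HF)) (is_zsum_scal (- a) _ _ (Hd cos)))).
    rewrite cos_0 in Z. replace ((fourier_cos F t - a) / (1 - a))
      with (/ (1 - a) * (fourier_cos F t + - a * 1)) by (field; lra).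
    eapply is_zsum_ext; [|exact Z]. intro k. unfold delazy. cbv beta. field. lra.
  - assert (Z := is_zsum_scal (/ (1 - a)) _ _ (is_zsum_plus _ _ _ _
      (zsum_correct _ (summable_mult_sin F t HF)) (is_zsum_scal (- a) _ _ (Hd sin)))).
    rewrite sin_0 in Z. replace (fourier_sin F t / (1 - a))
      with (/ (1 - a) * (fourier_sin F t + - a * 0)) by (field; lra).
    eapply is_zsum_ext; [|exact Z]. intro k. unfold delazy. cbv beta. field. lra.
Qed.

(* Removing the atom a at 0 turns Re F^ = FC into (FC - a)/(1 - a); the quadratic
   lower bound on FC (finite variance) keeps the loss 2 a (1 - FC) below half the gap. *)
Lemma delazy_modulus_le FC FS a s2 kap t :
  0 < a <= 1 / 2 -> 0 <= kap -> a * s2 <= kap / 2 ->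
  1 - s2 * t ^ 2 / 2 <= FC -> kap * t ^ 2 <= 1 - sqrt (FC ^ 2 + FS ^ 2) ->
  sqrt (((FC - a) / (1 - a)) ^ 2 + (FS / (1 - a)) ^ 2) <= 1 - kap / 4 * t ^ 2.
Proof.
  intros Ha Hk Has Hc Hgap.
  set (rho := sqrt (FC ^ 2 + FS ^ 2)) in Hgap.
  assert (r0 : 0 <= rho) by apply sqrt_pos.
  assert (Hr2 : rho ^ 2 = FC ^ 2 + FS ^ 2) by (apply pow2_sqrt; nra).
  assert (t2 : 0 <= t ^ 2) by apply pow2_ge_0.
  assert (kt : 0 <= kap * t ^ 2) by nra.
  assert (Hrr : rho ^ 2 <= 1 - kap * t ^ 2) by nra.
  set (y := kap / 2 * t ^ 2). assert (y0 : 0 <= y) by (unfold y; nra).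
  assert (N1 : (FC - a) ^ 2 + FS ^ 2 <= (1 - a) ^ 2 - y).
  { assert (a * FC >= a * (1 - s2 * t ^ 2 / 2)) by (apply Rle_ge, Rmult_le_compat_l; lra).
    assert (a * s2 * t ^ 2 <= kap / 2 * t ^ 2) by (apply Rmult_le_compat_r; auto).
    unfold y. nra. }
  assert (Q : ((FC - a) / (1 - a)) ^ 2 + (FS / (1 - a)) ^ 2 <= 1 - y).
  { replace (((FC - a) / (1 - a)) ^ 2 + (FS / (1 - a)) ^ 2)
      with (((FC - a) ^ 2 + FS ^ 2) / (1 - a) ^ 2) by (field; lra).
    apply Rle_trans with (((1 - a) ^ 2 - y) / (1 - a) ^ 2).
    - unfold Rdiv. apply Rmult_le_compat_r; [apply Rlt_le, Rinv_0_lt_compat; nra|lra].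
    - replace (((1 - a) ^ 2 - y) / (1 - a) ^ 2) with (1 - y / (1 - a) ^ 2) by (field; lra).
      assert (y <= y / (1 - a) ^ 2); [|lra].
      unfold Rdiv. rewrite <- (Rmult_1_r y) at 1. apply Rmult_le_compat_l; auto.
      rewrite <- Rinv_1. apply Rinv_le_contravar; nra. }
  assert (Y1 : y <= 1)
    by (assert (0 <= ((FC - a) / (1 - a)) ^ 2 + (FS / (1 - a)) ^ 2)
          by (apply Rplus_le_le_0_compat; apply pow2_ge_0); lra).
  replace (1 - kap / 4 * t ^ 2) with (1 - y / 2) by (unfold y; field).
  rewrite <- (sqrt_pow2 (1 - y / 2)) by lra. apply sqrt_le_1_alt. nra.
Qed.

Lemma delazy_fourier_gap F a kap t :
  prob F -> summable (fun k => IZR k ^ 2 * F k) -> 0 < a <= 1 / 2 -> 0 <= kap ->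
  a * zsum (fun k => IZR k ^ 2 * F k) <= kap / 2 ->
  kap * t ^ 2 <= 1 - Cmod (fourier F t) ->
  Cmod (fourier (delazy F a) t) <= 1 - kap / 4 * t ^ 2.
Proof.
  intros HP Hsq Ha Hk Has Hgap.
  destruct (fourier_delazy F a t (proj1 (proj2 HP)) ltac:(lra)) as [E1 E2].
  unfold fourier, Cmod. cbn [fst snd]. rewrite E1, E2.
  apply (delazy_modulus_le _ _ a (zsum (fun k => IZR k ^ 2 * F k))); auto.
  apply fourier_cos_prob_ge; auto.
Qed.

Lemma delazy_parameter_exists s2 kap : 0 <= s2 -> 0 < kap ->
  exists a, 0 < a <= 1 / 2 /\ a * s2 <= kap / 2.
Proof.
  intros Hs Hk. exists (Rmin (1 / 2) (kap / (2 * s2 + 2))).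
  assert (Hm : Rmin (1 / 2) (kap / (2 * s2 + 2)) <= kap / (2 * s2 + 2)) by apply Rmin_r.
  split; [split; [apply Rmin_glb_lt; [lra|apply Rdiv_lt_0_compat; lra]|apply Rmin_l]|].
  apply Rle_trans with (kap / (2 * s2 + 2) * s2); [apply Rmult_le_compat_r; auto|].
  apply Rmult_le_reg_r with (2 * s2 + 2); [lra|].
  unfold Rdiv. replace (kap * / (2 * s2 + 2) * s2 * (2 * s2 + 2)) with (kap * s2) by (field; lra).
  nra.
Qed.

Theorem lemma8p1 (F : Z -> R) :
  prob F -> aperiodic F ->
  summable (fun k => IZR k ^ 2 * F k) ->
  exists beta : R, 0 < beta < 1 /\
    exists G : Z -> R,
      summable G /\
      (exists M : R, forall n : nat, L1norm (convpow G n) <= M) /\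
      (forall k : Z, F k = beta * G k + (1 - beta) * delta 0 k).
Proof.
  intros HP Hap Hsq.
  destruct (aperiodic_fourier_gap F HP Hap) as [kap [Hk Hgap]].
  assert (Hkap : kap * PI ^ 2 <= 1)
    by (assert (0 <= Cmod (fourier F PI)) by apply Cmod_ge_0;
        assert (Hp := PI_RGT_0); specialize (Hgap PI ltac:(lra)); lra).
  assert (Hs2 : 0 <= zsum (fun k => IZR k ^ 2 * F k)).
  { apply zsum_nonneg; auto. intro k. apply Rmult_le_pos; [apply pow2_ge_0|apply HP]. }
  destruct (delazy_parameter_exists _ kap Hs2 Hk) as [a [Ha Has]].
  assert (HW := summable_delazy_sq_weight F a HP Hsq ltac:(lra) ltac:(lra)).
  exists (1 - a). split; [lra|]. exists (delazy F a). split; [|split].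
  - apply summable_sq_weight, HW.
  - apply (convpow_L1_bounded _ (kap / 4)); auto; try lra.
    + apply zsum_delazy; auto. lra.
    + intros t Ht. apply delazy_fourier_gap; auto. lra.
  - intro k. unfold delazy. field. lra.
Qed.
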